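(* Assume conditions (C1)–(C6). If $\zeta,\tilde\zeta\in\Theta$ satisfy $\liminf_{k\to\infty}\|\zeta_k-\tilde\zeta_k\|=0$, then the pair $\varphi_\zeta,\varphi_{\tilde\zeta}$ is proximal: for every $\epsilon>0$ and every $E\in\mathbb N$ there exists an integer $k_0$ such that $\|\varphi_\zeta(t)-\varphi_{\tilde\zeta}(t)\|<\epsilon$ for all $t\in[\theta_{2k_0-1},\theta_{2(k_0+E)}]\cap\mathbb T_0$.
   Context: Fix integers $m,n\ge1$ and $r\ge0$. Cells are indexed by pairs $(i,j)$, $1\le i\le m$, $1\le j\le n$. The $r$-neighbourhood of $(i,j)$ is $N_r(i,j)=\{(h,l):1\le h\le m,\ 1\le l\le n,\ \max(|h-i|,|l-j|)\le r\}$. Fix constants $a_{ij}>0$, $C^{hl}_{ij}\ge0$, and a continuous function $f:\mathbb R\to\mathbb R$. Vectors of $\mathbb R^{mn}$ are written $v=\{v_{ij}\}$, with norm $\|v\|=\max_{(i,j)}|v_{ij}|$. Time scale: $\{\theta_k\}_{k\in\mathbb Z}$ is strictly increasing, $\theta_{-1}<0<\theta_0$, and there exist $\omega>0$ and $p\in\mathbb N$ with $\theta_{k+2p}=\theta_k+\omega$ for all $k$. Set $\mathbb T_0=\bigcup_{k\in\mathbb Z}[\theta_{2k-1},\theta_{2k}]$, $\delta_k=\theta_{2k+1}-\theta_{2k}$, $\eta_k=\theta_{2k}-\theta_{2k-1}$ (both $p$-periodic in $k$), $\delta=\max_{1\le k\le p}\delta_k$. On $\mathbb T_0'=\mathbb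 T_0\setminus\{\theta_{2k-1}:k\in\mathbb Z\}$ define $\psi(t)=t-\sum_{0<\theta_{2k}<t}\delta_k$ for $t\ge0$ and $\psi(t)=t+\sum_{t\le\theta_{2k}<0}\delta_k$ for $t<0$; put $s_k=\psi(\theta_{2k})$, so $s_k-s_{k-1}=\eta_k$, and write $\psi(\omega):=\omega-\sum_{k=1}^p\delta_k=\sum_{k=1}^p\eta_k$. Inputs: $\Lambda\subset\mathbb R^{mn}$ is compact and $F:\Lambda\to\Lambda$ is continuous. $\Theta$ is the set of all sequences $\zeta=\{\zeta_k\}_{k\in\mathbb Z}$, $\zeta_k=\{\zeta^{ij}_k\}\in\Lambda$, with $\zeta_{k+1}=F(\zeta_k)$ for all $k\in\mathbb Z$. For $\zeta\in\Theta$, $L_{ij}(t,\zeta)=\zeta^{ij}_k$ for $t\in[\theta_{2k-1},\theta_{2k}]$. Network $(N_\zeta)$ on $\mathbb T_0$: $x^\Delta_{ij}(t)=-a_{ij}x_{ij}(t)-\sum_{(h,l)\in N_r(i,j)}C^{hl}_{ij}f(x_{hl}(t))x_{ij}(t)+L_{ij}(t,\zeta)$, $t\in\mathbb T_0$, where the $\Delta$-derivative at $\theta_{2k}$ is $(x(\theta_{2k+1})-x(\theta_{2k}))/\delta_k$ and elsewhere the ordinary derivative. Concretely, a solution on $\mathbb T_0$ is a function continuous and (one-sidedly at endpoints) differentiable on each $[\theta_{2k-1},\theta_{2k}]$ satisfying there $x_{ij}'=-a_{ij}x_{ij}-\sum_{(h,l)\in N_r(i,j)}C^{hl}_{ij}f(x_{hl})x_{ij}+\zeta^{ij}_k$,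 together with $x_{ij}(\theta_{2k+1})=(1-\delta_ka_{ij})x_{ij}(\theta_{2k})-\delta_k\sum_{(h,l)\in N_r(i,j)}C^{hl}_{ij}f(x_{hl}(\theta_{2k}))x_{ij}(\theta_{2k})+\delta_k\zeta^{ij}_k$. Impulsive system $(I_\zeta)$: for $s\in(s_{k-1},s_k)$, $y_{ij}'(s)=-a_{ij}y_{ij}(s)-\sum_{(h,l)\in N_r(i,j)}C^{hl}_{ij}f(y_{hl}(s))y_{ij}(s)+\zeta^{ij}_k$, and at $s=s_k$, $y_{ij}(s_k+)-y_{ij}(s_k)=-\delta_ka_{ij}y_{ij}(s_k)-\delta_k\sum_{(h,l)\in N_r(i,j)}C^{hl}_{ij}f(y_{hl}(s_k))y_{ij}(s_k)+\delta_k\zeta^{ij}_k$. Solutions are left-continuous, continuous except for discontinuities of the first kind at the $s_k$. Let $u_{ij}(s,\tau)=e^{-a_{ij}(s-\tau)}\prod_{\nu=l}^{k}(1-\delta_\nu a_{ij})$ if $s_{l-1}<\tau\le s_l$, $s_k<s\le s_{k+1}$, $k\ge l$, and $u_{ij}(s,\tau)=e^{-a_{ij}(s-\tau)}$ if $s_k<\tau\le s\le s_{k+1}$. Let $\lambda_{ij}=a_{ij}-\frac1{\psi(\omega)}\sum_{\nu=0}^{p-1}\ln|1-\delta_\nu a_{ij}|$, $\lambda=\min_{(i,j)}\lambda_{ij}$. Conditions: (C1) $\delta_ka_{ij}\ne1$ for all $i,j,k$; (C2) $\lambda>0$; (C3) $\sup_{s\in\mathbb R}|f(s)|\le M_f$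 for some $M_f>0$; (C4) $|f(s_1)-f(s_2)|\le L_f|s_1-s_2|$ for all $s_1,s_2$, for some $L_f>0$. Under (C1),(C2) fix positive numbers $K_{ij}$ with $|u_{ij}(s,\tau)|\le K_{ij}e^{-\lambda_{ij}(s-\tau)}$ for $s\ge\tau$. Define $\bar c=\max_{(i,j)}\big(\frac{K_{ij}}{\lambda_{ij}}+\frac{p\delta K_{ij}}{1-e^{-\lambda_{ij}\psi(\omega)}}\big)\sum_{(h,l)\in N_r(i,j)}C^{hl}_{ij}$, $M_F=\max_{\eta\in\Lambda}\|F(\eta)\|$, $H_0=\frac{M_F}{1-M_f\bar c}\max_{(i,j)}\big(\frac{K_{ij}}{\lambda_{ij}}+\frac{p\delta K_{ij}}{1-e^{-\lambda_{ij}\psi(\omega)}}\big)$, $\bar d=(M_f+H_0L_f)\max_{(i,j)}K_{ij}\sum_{(h,l)\in N_r(i,j)}C^{hl}_{ij}$. (C5) $(M_f+H_0L_f)\bar c<1$. (C6) $-\lambda+\bar d+\frac{p}{\psi(\omega)}\ln(1+\delta\bar d)<0$. Under (C1)–(C5), for $\zeta\in\Theta$ the system $(I_\zeta)$ has a unique solution $\phi_\zeta$ on $\mathbb R$ with $\sup_s\|\phi_\zeta(s)\|\le H_0$; define $\varphi_\zeta:\mathbb T_0\to\mathbb R^{mn}$ by $\varphi_\zeta(t)=\phi_\zeta(\psi(t))$ for $t\in\mathbb T_0'$ and $\varphi_\zeta(\theta_{2k+1})=\phi_\zeta(s_k+)$. Then $\varphi_\zeta$ is the unique solution of $(N_\zeta)$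 on $\mathbb T_0$ with $\sup_{t\in\mathbb T_0}\|\varphi_\zeta(t)\|\le H_0$. *)

From Stdlib Require Import Reals Lra Lia ZArith List.
Import ListNotations.
Open Scope R_scope.

(* Vectors of R^{mn}: functions on pairs of indices; only the cells
   (i,j) with 1<=i<=m, 1<=j<=n are relevant. *)
Definition vec := nat -> nat -> R.

Definition vsub (u v : vec) : vec := fun i j => u i j - v i j.

Definition cells (m n : nat) : list (nat * nat) :=
  flat_map (fun i => map (fun j => (i, j)) (seq 1 n)) (seq 1 m).

Definition is_cell (m n i j : nat) : Prop :=
  (1 <= i <= m)%nat /\ (1 <= j <= n)%nat.

(* ||v|| = max_{(i,j)} |v_ij| (all terms are >= 0, so starting the fold at 0
   gives the maximum) *)
Definition vnorm (m n : nat) (v : vec) : R :=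
  fold_right Rmax 0 (map (fun c => Rabs (v (fst c) (snd c))) (cells m n)).

(* max / min over all cells of a real quantity g i j (cell (1,1) exists
   since m,n >= 1) *)
Definition cellmax (m n : nat) (g : nat -> nat -> R) : R :=
  fold_right Rmax (g 1%nat 1%nat) (map (fun c => g (fst c) (snd c)) (cells m n)).
Definition cellmin (m n : nat) (g : nat -> nat -> R) : R :=
  fold_right Rmin (g 1%nat 1%nat) (map (fun c => g (fst c) (snd c)) (cells m n)).

(* (h,l) in N_r(i,j) :  max(|h-i|,|l-j|) <= r  (|h-i| = (h-i)+(i-h) in nat) *)
Definition in_nbhd (r i j h l : nat) : bool :=
  Nat.leb ((h - i) + (i - h)) r && Nat.leb ((l - j) + (j - l)) r.

Definition nbsum (m n r i j : nat) (g : nat -> nat -> R) : R :=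
  fold_right Rplus 0
    (map (fun c => if in_nbhd r i j (fst c) (snd c) then g (fst c) (snd c) else 0)
         (cells m n)).

(* integer-indexed finite sums / products: sum_{k=a}^{b} g k (empty if b<a) *)
Definition sumZ (g : Z -> R) (a b : Z) : R :=
  fold_right Rplus 0 (map (fun i => g (a + Z.of_nat i)%Z) (seq 0 (Z.to_nat (b - a + 1)))).
Definition prodZ (g : Z -> R) (a b : Z) : R :=
  fold_right Rmult 1 (map (fun i => g (a + Z.of_nat i)%Z) (seq 0 (Z.to_nat (b - a + 1)))).

Definition delta (theta : Z -> R) (k : Z) : R := theta (2*k+1)%Z - theta (2*k)%Z.
Definition eta (theta : Z -> R) (k : Z) : R := theta (2*k)%Z - theta (2*k-1)%Z.

Definition delta_max (theta : Z -> R) (p : nat) : R :=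
  fold_right Rmax (delta theta 1%Z) (map (fun k => delta theta (Z.of_nat k)) (seq 1 p)).

Definition psi_omega (theta : Z -> R) (omega : R) (p : nat) : R :=
  omega - sumZ (delta theta) 1 (Z.of_nat p).

Definition inT0 (theta : Z -> R) (t : R) : Prop :=
  exists k : Z, theta (2*k-1)%Z <= t <= theta (2*k)%Z.

(* s_k = psi(theta_{2k}).  Since theta_{2j} > 0 iff j >= 0, the definition of
   psi gives psi(theta_{2k}) = theta_{2k} - sum_{j=0}^{k-1} delta_j for k >= 0
   and theta_{2k} + sum_{j=k}^{-1} delta_j for k < 0. *)
Definition s_seq (theta : Z -> R) (k : Z) : R :=
  if (0 <=? k)%Z then theta (2*k)%Z - sumZ (delta theta) 0 (k-1)
  else theta (2*k)%Z + sumZ (delta theta) k (-1).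

Definition lambda_ij (theta : Z -> R) (omega : R) (p : nat) (aij : R) : R :=
  aij - / psi_omega theta omega p *
        sumZ (fun nu => ln (Rabs (1 - delta theta nu * aij))) 0 (Z.of_nat p - 1).

Definition lambda_min (m n : nat) (theta : Z -> R) (omega : R) (p : nat)
  (a : nat -> nat -> R) : R :=
  cellmin m n (fun i j => lambda_ij theta omega p (a i j)).

(* Bound |u_ij(s,tau)| <= K_ij e^{-lambda_ij (s - tau)} for s >= tau, where
   u_ij(s,tau) = e^{-a_ij(s-tau)} prod_{nu=l}^{k} (1 - delta_nu a_ij) when
   s_{l-1} < tau <= s_l, s_k < s <= s_{k+1}  (k >= l; the case k = l-1, i.e.
   tau and s in the same interval, is the empty product). *)
Definition u_bound (theta : Z -> R) (omega : R) (p : nat) (aij Kij : R) : Prop :=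
  forall (l k : Z) (tau s : R),
    s_seq theta (l - 1) < tau <= s_seq theta l ->
    s_seq theta k < s <= s_seq theta (k + 1) ->
    tau <= s ->
    Rabs (exp (- aij * (s - tau)) * prodZ (fun nu => 1 - delta theta nu * aij) l k)
      <= Kij * exp (- lambda_ij theta omega p aij * (s - tau)).

Definition coefK (theta : Z -> R) (omega : R) (p : nat) (aij Kij : R) : R :=
  Kij / lambda_ij theta omega p aij
  + INR p * delta_max theta p * Kij
      / (1 - exp (- lambda_ij theta omega p aij * psi_omega theta omega p)).

Definition cbar (m n r : nat) (theta : Z -> R) (omega : R) (p : nat)
  (a K : nat -> nat -> R) (C : nat -> nat -> nat -> nat -> R) : R :=
  cellmax m n (fun i j => coefK theta omega p (a i j) (K i j) * nbsum m n r i j (C i j)).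

Definition H0 (m n r : nat) (theta : Z -> R) (omega : R) (p : nat)
  (a K : nat -> nat -> R) (C : nat -> nat -> nat -> nat -> R) (MF Mf : R) : R :=
  MF / (1 - Mf * cbar m n r theta omega p a K C)
  * cellmax m n (fun i j => coefK theta omega p (a i j) (K i j)).

Definition dbar (m n r : nat) (theta : Z -> R) (omega : R) (p : nat)
  (a K : nat -> nat -> R) (C : nat -> nat -> nat -> nat -> R) (MF Mf Lf : R) : R :=
  (Mf + H0 m n r theta omega p a K C MF Mf * Lf)
  * cellmax m n (fun i j => K i j * nbsum m n r i j (C i j)).

Definition seq_compact (m n : nat) (Lam : vec -> Prop) : Prop :=
  forall u : nat -> vec, (forall k, Lam (u k)) ->
  exists (phi : nat -> nat) (v : vec),
    (forall k, (phi k < phi (S k))%nat) /\ Lam v /\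
    forall eps, eps > 0 -> exists N : nat, forall k, (N <= k)%nat ->
      vnorm m n (vsub (u (phi k)) v) < eps.

Definition cont_on (m n : nat) (Lam : vec -> Prop) (F : vec -> vec) : Prop :=
  forall eta0, Lam eta0 -> forall eps, eps > 0 -> exists d, d > 0 /\
    forall eta1, Lam eta1 -> vnorm m n (vsub eta1 eta0) < d ->
      vnorm m n (vsub (F eta1) (F eta0)) < eps.

Definition in_Theta (Lam : vec -> Prop) (F : vec -> vec) (zeta : Z -> vec) : Prop :=
  forall k : Z, Lam (zeta k) /\ zeta (k + 1)%Z = F (zeta k).

Definition liminf_eq (a : nat -> R) (L : R) : Prop :=
  forall eps, eps > 0 ->
    (exists N : nat, forall k, (N <= k)%nat -> L - eps < a k) /\
    (forall N : nat, exists k, (N <= k)%nat /\ a k < L + eps).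

Definition deriv_within (g : R -> R) (lo hi t D : R) : Prop :=
  forall eps, eps > 0 -> exists d, d > 0 /\
    forall h, h <> 0 -> Rabs h < d -> lo <= t + h <= hi ->
      Rabs ((g (t + h) - g t) / h - D) < eps.

Definition is_sol_N (m n r : nat) (a : nat -> nat -> R)
  (C : nat -> nat -> nat -> nat -> R) (f : R -> R) (theta : Z -> R)
  (zeta : Z -> vec) (x : R -> vec) : Prop :=
  forall (k : Z) (i j : nat), is_cell m n i j ->
    (forall t, theta (2*k-1)%Z <= t <= theta (2*k)%Z ->
       deriv_within (fun u => x u i j) (theta (2*k-1)%Z) (theta (2*k)%Z) t
         (- a i j * x t i j
          - nbsum m n r i j (fun h l => C i j h l * f (x t h l)) * x t i j
          + zeta k i j)) /\
    x (theta (2*k+1)%Z) i j =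
      (1 - delta theta k * a i j) * x (theta (2*k)%Z) i j
      - delta theta k * nbsum m n r i j
          (fun h l => C i j h l * f (x (theta (2*k)%Z) h l)) * x (theta (2*k)%Z) i j
      + delta theta k * zeta k i j.

From Stdlib Require Import Reals Lra Lia ZArith List ClassicalEpsilon.
Open Scope R_scope.

(** Let z = x - y. On each interval of T_0 every cell z_ij solves a linear equation with
    decay rate a_ij, and at each jump it is multiplied by 1 - delta_k a_ij; the forcing is the
    difference of the couplings, Lipschitz in z by (C3)-(C4), plus zeta - zeta'. Bounding the
    Green kernel by K_ij e^{-lambda_ij (s - tau)}, the variation of constants formula turns a
    bound on z over a window of intervals into a better one, a contraction by (C5). Starting
    from the a priori bound 2 H0, this shows that wherever zeta and zeta' stay eta-close, z is
    O(eta) plus a discrete Gronwall term that decays exponentially by (C6). Since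
    ||zeta_k - zeta'_k|| comes arbitrarily close to 0 and F is uniformly continuous on the
    compact Lambda, the orbits stay eta-close on windows of any fixed length; past the first
    p M intervals of such a window the Gronwall term is below eps / 2. *)

(** * Increments of functions with one-sided derivatives *)

(* Extending a function on [lo, hi] by constants lets Stdlib's mean value theorem, which needs
   derivatives on an open set, be applied to functions with one-sided derivatives on [lo, hi]. *)
Definition clamp (lo hi s : R) : R := Rmax lo (Rmin hi s).

Lemma clamp_in lo hi s : lo <= hi -> lo <= clamp lo hi s <= hi.
Proof. intros; unfold clamp, Rmax, Rmin; repeat destruct Rle_dec; lra. Qed.

Lemma clamp_id lo hi s : lo <= s <= hi -> clamp lo hi s = s.
Proof. intros; unfold clamp, Rmax, Rmin; repeat destruct Rle_dec; lra. Qed.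

Lemma clamp_dist_le lo hi s t :
  lo <= hi -> lo <= t <= hi -> Rabs (clamp lo hi s - t) <= Rabs (s - t).
Proof.
  intros; unfold clamp, Rmax, Rmin; repeat destruct Rle_dec;
    unfold Rabs; repeat destruct Rcase_abs; lra.
Qed.

Lemma derivable_pt_lim_ext f g x l :
  (forall y, f y = g y) -> derivable_pt_lim f x l -> derivable_pt_lim g x l.
Proof.
  intros Hfg Hf eps Heps. destruct (Hf eps Heps) as [d Hd].
  exists d. intros. rewrite <- !Hfg. auto.
Qed.

Lemma deriv_within_minus g1 g2 lo hi t D1 D2 :
  deriv_within g1 lo hi t D1 -> deriv_within g2 lo hi t D2 ->
  deriv_within (fun u => g1 u - g2 u) lo hi t (D1 - D2).
Proof.
  intros H1 H2 eps Heps.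
  destruct (H1 (eps / 2) ltac:(lra)) as [d1 [Hd1 H1']].
  destruct (H2 (eps / 2) ltac:(lra)) as [d2 [Hd2 H2']].
  exists (Rmin d1 d2). split; [now apply Rmin_pos|].
  intros h Hh0 Hh Hin.
  assert (Hh1 : Rabs h < d1) by (eapply Rlt_le_trans; [exact Hh | apply Rmin_l]).
  assert (Hh2 : Rabs h < d2) by (eapply Rlt_le_trans; [exact Hh | apply Rmin_r]).
  specialize (H1' h Hh0 Hh1 Hin). specialize (H2' h Hh0 Hh2 Hin).
  replace ((g1 (t + h) - g2 (t + h) - (g1 t - g2 t)) / h - (D1 - D2))
    with (((g1 (t + h) - g1 t) / h - D1) - ((g2 (t + h) - g2 t) / h - D2))
    by (field; exact Hh0).
  eapply Rle_lt_trans; [apply Rabs_triang|]. rewrite Rabs_Ropp. lra.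
Qed.

Lemma deriv_within_clamp_interior g lo hi t D :
  deriv_within g lo hi t D -> lo < t < hi ->
  derivable_pt_lim (fun s => g (clamp lo hi s)) t D.
Proof.
  intros Hd Ht eps Heps.
  destruct (Hd eps Heps) as [d [Hdp Hdd]].
  assert (Hm : 0 < Rmin d (Rmin (t - lo) (hi - t))) by (repeat apply Rmin_pos; lra).
  exists (mkposreal _ Hm). intros h Hh0 Hh. simpl in Hh.
  assert (Hh1 : Rabs h < d) by (eapply Rlt_le_trans; [exact Hh | apply Rmin_l]).
  assert (Hh2 : Rabs h < Rmin (t - lo) (hi - t))
    by (eapply Rlt_le_trans; [exact Hh | apply Rmin_r]).
  assert (Hh3 : Rabs h < t - lo) by (eapply Rlt_le_trans; [exact Hh2 | apply Rmin_l]).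
  assert (Hh4 : Rabs h < hi - t) by (eapply Rlt_le_trans; [exact Hh2 | apply Rmin_r]).
  assert (Hr : lo <= t + h <= hi) by (unfold Rabs in *; destruct Rcase_abs; lra).
  rewrite (clamp_id lo hi (t + h)), (clamp_id lo hi t) by lra.
  apply Hdd; auto.
Qed.

Lemma deriv_within_clamp_continuous g lo hi t D :
  lo <= hi -> lo <= t <= hi -> deriv_within g lo hi t D ->
  continuity_pt (fun s => g (clamp lo hi s)) t.
Proof.
  intros Hlh Ht Hd.
  unfold continuity_pt, continue_in, limit1_in, limit_in; simpl; unfold R_dist.
  intros eps Heps.
  destruct (Hd 1 Rlt_0_1) as [d [Hdp Hdd]].
  assert (HD : 0 < Rabs D + 1) by (pose proof (Rabs_pos D); lra).
  assert (Hm : 0 < Rmin d (eps / (Rabs D + 1))) by (apply Rmin_pos; auto; apply Rdiv_lt_0_compat; auto).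
  exists (Rmin d (eps / (Rabs D + 1))). split; auto.
  intros s [_ Hs].
  rewrite (clamp_id lo hi t) by lra.
  set (h := clamp lo hi s - t).
  assert (Hh : Rabs h <= Rabs (s - t)) by (apply clamp_dist_le; lra).
  assert (Hin : lo <= t + h <= hi) by (unfold h; pose proof (clamp_in lo hi s Hlh); lra).
  replace (clamp lo hi s) with (t + h) by (unfold h; ring).
  destruct (Req_dec h 0) as [Hh0 | Hh0].
  { rewrite Hh0, Rplus_0_r, Rminus_diag, Rabs_R0; auto. }
  assert (Hh1 : Rabs h < d)
    by (eapply Rle_lt_trans; [exact Hh|]; eapply Rlt_le_trans; [exact Hs | apply Rmin_l]).
  assert (Hh2 : Rabs h < eps / (Rabs D + 1))
    by (eapply Rle_lt_trans; [exact Hh|]; eapply Rlt_le_trans; [exact Hs | apply Rmin_r]).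
  specialize (Hdd h Hh0 Hh1 Hin).
  set (q := (g (t + h) - g t) / h) in *.
  replace (g (t + h) - g t) with (q * h) by (unfold q; field; auto).
  rewrite Rabs_mult.
  assert (Hq : Rabs q <= Rabs D + 1).
  { replace q with ((q - D) + D) by ring. eapply Rle_trans; [apply Rabs_triang|]. lra. }
  apply (Rmult_lt_compat_r (Rabs D + 1)) in Hh2; auto.
  replace (eps / (Rabs D + 1) * (Rabs D + 1)) with eps in Hh2 by (field; lra).
  eapply Rle_lt_trans; [| exact Hh2]. rewrite Rmult_comm.
  apply Rmult_le_compat_l; auto. apply Rabs_pos.
Qed.

Lemma nonpos_derivative_antitone f f' lo hi : lo < hi ->
  (forall c, lo < c < hi -> derivable_pt_lim f c (f' c)) ->
  (forall c, lo <= c <= hi -> continuity_pt f c) ->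
  (forall c, lo < c < hi -> f' c <= 0) -> f hi <= f lo.
Proof.
  intros Hlh Hd Hc Hn.
  assert (pr1 : forall c, lo < c < hi -> derivable_pt f c) by (intros c Hc'; exists (f' c); apply Hd; exact Hc').
  assert (pr2 : forall c, lo < c < hi -> derivable_pt id c) by (intros; apply derivable_pt_id).
  destruct (MVT f id lo hi pr1 pr2 Hlh Hc) as [c [Pc HP]].
  { intros; apply derivable_continuous_pt, derivable_pt_id. }
  rewrite (derive_pt_eq_0 f c (f' c) (pr1 c Pc) (Hd c Pc)),
          (derive_pt_eq_0 id c 1 (pr2 c Pc) (derivable_pt_lim_id c)) in HP.
  unfold id in HP. specialize (Hn c Pc). nra.
Qed.

Lemma abs_increment_le (h h' G G' : R -> R) lo t : lo <= t ->
  (forall c, lo < c < t -> derivable_pt_lim h c (h' c)) ->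
  (forall c, lo < c < t -> derivable_pt_lim G c (G' c)) ->
  (forall c, lo <= c <= t -> continuity_pt h c) ->
  (forall c, lo <= c <= t -> continuity_pt G c) ->
  (forall c, lo < c < t -> Rabs (h' c) <= G' c) ->
  Rabs (h t - h lo) <= G t - G lo.
Proof.
  intros Hlt Hh HG Hhc HGc Hb.
  destruct (Req_dec t lo) as [E | E].
  { subst t. rewrite Rminus_diag, Rabs_R0. lra. }
  assert (Hup : h t - G t <= h lo - G lo).
  { apply (nonpos_derivative_antitone (fun s => h s - G s) (fun c => h' c - G' c)); [lra| | |].
    - intros c Hc. apply derivable_pt_lim_minus; auto.
    - intros c Hc. apply continuity_pt_minus; auto.
    - intros c Hc. pose proof (Hb c Hc). pose proof (Rle_abs (h' c)). lra. }
  assert (Hdown : - h t - G t <= - h lo - G lo).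
  { apply (nonpos_derivative_antitone (fun s => - h s - G s) (fun c => - h' c - G' c)); [lra| | |].
    - intros c Hc. apply derivable_pt_lim_minus; auto. apply derivable_pt_lim_opp; auto.
    - intros c Hc. apply continuity_pt_minus; auto. apply continuity_pt_opp; auto.
    - intros c Hc. pose proof (Hb c Hc). pose proof (Rle_abs (- h' c)).
      rewrite Rabs_Ropp in *. lra. }
  unfold Rabs; destruct Rcase_abs; lra.
Qed.

Lemma weighted_increment_le (w w' g D G G' : R -> R) lo hi t :
  lo < hi -> lo <= t <= hi ->
  (forall s, derivable_pt_lim w s (w' s)) ->
  (forall s, derivable_pt_lim G s (G' s)) ->
  (forall s, lo <= s <= hi -> deriv_within g lo hi s (D s)) ->
  (forall s, lo < s < t -> Rabs (w' s * g s + w s * D s) <= G' s) ->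
  Rabs (w t * g t - w lo * g lo) <= G t - G lo.
Proof.
  intros Hlh Ht Hw HG Hg Hb.
  set (h := fun s => w s * g (clamp lo hi s)).
  assert (Hc : forall s, lo <= s <= hi -> h s = w s * g s)
    by (intros; unfold h; rewrite clamp_id; auto).
  rewrite <- !Hc by lra.
  apply (abs_increment_le h (fun s => w' s * g s + w s * D s) G G'); [lra | | auto | | | exact Hb].
  - intros c Hc'. unfold h.
    pose proof (derivable_pt_lim_mult _ _ _ _ _ (Hw c)
                  (deriv_within_clamp_interior _ _ _ _ _ (Hg c ltac:(lra)) ltac:(lra))) as Hd.
    unfold mult_fct in Hd. rewrite (clamp_id lo hi c) in Hd by lra. exact Hd.
  - intros c Hc'. unfold h. apply continuity_pt_mult.
    + apply derivable_continuous_pt. exists (w' c). apply Hw.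
    + eapply deriv_within_clamp_continuous; [lra | lra | apply Hg; lra].
  - intros c Hc'. apply derivable_continuous_pt. exists (G' c). apply HG.
Qed.

(** * Finite sums, cells and the max norm *)

Fixpoint sumn (g : nat -> R) (k : nat) : R :=
  match k with O => 0 | S k' => sumn g k' + g k' end.
Fixpoint prodn (g : nat -> R) (k : nat) : R :=
  match k with O => 1 | S k' => prodn g k' * g k' end.

Lemma fold_right_Rplus_init l c : fold_right Rplus c l = fold_right Rplus 0 l + c.
Proof. induction l; simpl; [ring | rewrite IHl; ring]. Qed.

Lemma fold_right_Rmult_init l c : fold_right Rmult c l = fold_right Rmult 1 l * c.
Proof. induction l; simpl; [ring | rewrite IHl; ring]. Qed.

Lemma sumZ_sumn g a b :
  sumZ g a b = sumn (fun i => g (a + Z.of_nat i)%Z) (Z.to_nat (b - a + 1)).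
Proof.
  unfold sumZ. induction (Z.to_nat (b - a + 1)) as [|N IH]; [reflexivity|].
  rewrite seq_S, map_app, fold_right_app. simpl. rewrite fold_right_Rplus_init, IH. ring.
Qed.

Lemma prodZ_prodn g a b :
  prodZ g a b = prodn (fun i => g (a + Z.of_nat i)%Z) (Z.to_nat (b - a + 1)).
Proof.
  unfold prodZ. induction (Z.to_nat (b - a + 1)) as [|N IH]; [reflexivity|].
  rewrite seq_S, map_app, fold_right_app. simpl. rewrite fold_right_Rmult_init, IH. ring.
Qed.

Lemma sumn_ext g h k : (forall i, (i < k)%nat -> g i = h i) -> sumn g k = sumn h k.
Proof.
  induction k; simpl; intros H; auto.
  rewrite IHk by (intros; apply H; lia). rewrite H by lia. reflexivity.
Qed.

Lemma prodn_ext g h k : (forall i, (i < k)%nat -> g i = h i) -> prodn g k = prodn h k.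
Proof.
  induction k; simpl; intros H; auto.
  rewrite IHk by (intros; apply H; lia). rewrite H by lia. reflexivity.
Qed.

Lemma sumn_shift g k : sumn g (S k) = g O + sumn (fun i => g (S i)) k.
Proof. induction k; simpl in *; [ring | rewrite IHk; ring]. Qed.

Lemma prodn_shift g k : prodn g (S k) = g O * prodn (fun i => g (S i)) k.
Proof. induction k; simpl in *; [ring | rewrite IHk; ring]. Qed.

Lemma sumn_le g h k : (forall i, (i < k)%nat -> g i <= h i) -> sumn g k <= sumn h k.
Proof.
  induction k; simpl; intros H; [lra|].
  pose proof (H k (Nat.lt_succ_diag_r k)).
  assert (sumn g k <= sumn h k) by (apply IHk; intros; apply H; lia). lra.
Qed.

Lemma sumn_const c k : sumn (fun _ => c) k = INR k * c.
Proof. induction k; simpl sumn; [simpl; ring | rewrite IHk, S_INR; ring]. Qed.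

Lemma sumn_nonneg g k : (forall i, (i < k)%nat -> 0 <= g i) -> 0 <= sumn g k.
Proof.
  intros H. replace 0 with (sumn (fun _ => 0) k) by (rewrite sumn_const; ring).
  now apply sumn_le.
Qed.

Lemma sumn_le_more g k1 k2 : (k1 <= k2)%nat -> (forall i, 0 <= g i) -> sumn g k1 <= sumn g k2.
Proof. intros H Hg. induction H; [lra | simpl; pose proof (Hg m); lra]. Qed.

Lemma sumn_add g k1 k2 : sumn g (k1 + k2) = sumn g k1 + sumn (fun i => g (k1 + i)%nat) k2.
Proof.
  induction k2; simpl; [rewrite Nat.add_0_r; ring|].
  rewrite Nat.add_succ_r. simpl. rewrite IHk2. ring.
Qed.

Lemma sumn_rev g k : sumn (fun i => g (k - 1 - i)%nat) k = sumn g k.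
Proof.
  induction k; auto. rewrite sumn_shift. simpl sumn at 2.
  replace (S k - 1 - 0)%nat with k by lia. rewrite <- IHk.
  rewrite (sumn_ext (fun i => g (S k - 1 - S i)%nat) (fun i => g (k - 1 - i)%nat))
    by (intros; f_equal; lia).
  ring.
Qed.

Lemma sumn_scal c g k : sumn (fun i => c * g i) k = c * sumn g k.
Proof. induction k; simpl; [ring | rewrite IHk; ring]. Qed.


Lemma prodn_pos g k : (forall i, 0 < g i) -> 0 < prodn g k.
Proof. intros H; induction k; simpl; [lra | apply Rmult_lt_0_compat; auto]. Qed.

Lemma prodn_le_pow g b k : (forall i, (i < k)%nat -> 0 <= g i <= b) -> prodn g k <= b ^ k.
Proof.
  intros H.
  assert (Hall : 0 <= prodn g k <= b ^ k).
  { induction k; simpl; [lra|].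
    destruct IHk as [H0 H1]; [intros; apply H; lia|].
    destruct (H k (Nat.lt_succ_diag_r k)). split; [nra|].
    rewrite Rmult_comm. apply Rmult_le_compat; auto. }
  apply Hall.
Qed.

Lemma prodZ_empty g l : prodZ g l (l - 1) = 1.
Proof. rewrite prodZ_prodn. replace (l - 1 - l + 1)%Z with 0%Z by ring. reflexivity. Qed.

Lemma prodZ_split g l k : (l <= k)%Z -> prodZ g l k = g l * prodZ g (l + 1) k.
Proof.
  intros H. rewrite !prodZ_prodn.
  replace (Z.to_nat (k - l + 1)) with (S (Z.to_nat (k - (l + 1) + 1))) by lia.
  rewrite prodn_shift. f_equal; [f_equal; lia|].
  apply prodn_ext. intros; f_equal; lia.
Qed.

Lemma in_cells m n i j : In (i, j) (cells m n) <-> is_cell m n i j.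
Proof.
  unfold cells, is_cell. rewrite in_flat_map. split.
  - intros [i' [Hi Hj]]. apply in_map_iff in Hj. destruct Hj as [j' [E Hj]].
    inversion E; subst. apply in_seq in Hi. apply in_seq in Hj. lia.
  - intros [Hi Hj]. exists i. split; [apply in_seq; lia|].
    apply in_map_iff. exists j. split; auto. apply in_seq; lia.
Qed.

Lemma in_cells_is_cell m n c : In c (cells m n) -> is_cell m n (fst c) (snd c).
Proof. destruct c; simpl. apply in_cells. Qed.

Lemma fold_right_Rmax_ge x c l : In x l -> x <= fold_right Rmax c l.
Proof.
  induction l; simpl; intros H; [tauto|].
  destruct H; [subst; apply Rmax_l|].
  eapply Rle_trans; [apply IHl; auto | apply Rmax_r].
Qed.

Lemma fold_right_Rmax_init c l : c <= fold_right Rmax c l.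
Proof. induction l; simpl; [lra|]. eapply Rle_trans; [apply IHl | apply Rmax_r]. Qed.

Lemma fold_right_Rmax_lub M c l :
  c <= M -> (forall x, In x l -> x <= M) -> fold_right Rmax c l <= M.
Proof. induction l; simpl; intros; auto. apply Rmax_lub; auto. Qed.

Lemma fold_right_Rmin_le x c l : In x l -> fold_right Rmin c l <= x.
Proof.
  induction l; simpl; intros H; [tauto|].
  destruct H; [subst; apply Rmin_l|].
  eapply Rle_trans; [apply Rmin_r | apply IHl; auto].
Qed.

Lemma in_map_cells m n (g : nat -> nat -> R) i j :
  is_cell m n i j -> In (g i j) (map (fun c => g (fst c) (snd c)) (cells m n)).
Proof. intros H. apply in_map_iff. exists (i, j). split; auto. now apply in_cells. Qed.

Lemma Rabs_le_vnorm m n v i j : is_cell m n i j -> Rabs (v i j) <= vnorm m n v.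
Proof.
  intros H. apply fold_right_Rmax_ge, (in_map_cells m n (fun i j => Rabs (v i j))), H.
Qed.

Lemma vnorm_nonneg m n v : 0 <= vnorm m n v.
Proof. apply fold_right_Rmax_init. Qed.

Lemma vnorm_le m n v M :
  0 <= M -> (forall i j, is_cell m n i j -> Rabs (v i j) <= M) -> vnorm m n v <= M.
Proof.
  intros H0 H. apply fold_right_Rmax_lub; auto. intros x Hx. apply in_map_iff in Hx.
  destruct Hx as [c [E Hc]]. subst. apply H, in_cells_is_cell, Hc.
Qed.

Lemma le_cellmax m n g i j : is_cell m n i j -> g i j <= cellmax m n g.
Proof. intros H. apply fold_right_Rmax_ge, in_map_cells, H. Qed.

Lemma cellmin_le m n g i j : is_cell m n i j -> cellmin m n g <= g i j.
Proof. intros H. apply fold_right_Rmin_le, in_map_cells, H. Qed.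

Lemma vnorm_vsub_triang m n u v w :
  vnorm m n (vsub u w) <= vnorm m n (vsub u v) + vnorm m n (vsub v w).
Proof.
  apply vnorm_le; [pose proof (vnorm_nonneg m n (vsub u v)); pose proof (vnorm_nonneg m n (vsub v w)); lra|].
  intros i j H. unfold vsub.
  replace (u i j - w i j) with ((u i j - v i j) + (v i j - w i j)) by ring.
  eapply Rle_trans; [apply Rabs_triang|].
  apply Rplus_le_compat; apply (Rabs_le_vnorm m n (vsub _ _) i j H).
Qed.

Lemma vnorm_vsub_sym m n u v : vnorm m n (vsub u v) = vnorm m n (vsub v u).
Proof.
  apply Rle_antisym; apply vnorm_le; try apply vnorm_nonneg; intros i j H; unfold vsub;
    rewrite Rabs_minus_sym; apply (Rabs_le_vnorm m n (vsub _ _) i j H).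
Qed.

Lemma vnorm_vsub_le m n u v : vnorm m n (vsub u v) <= vnorm m n u + vnorm m n v.
Proof.
  apply vnorm_le; [pose proof (vnorm_nonneg m n u); pose proof (vnorm_nonneg m n v); lra|].
  intros i j H. unfold vsub, Rminus. eapply Rle_trans; [apply Rabs_triang|].
  rewrite Rabs_Ropp. apply Rplus_le_compat; apply Rabs_le_vnorm; auto.
Qed.

Lemma nbsum_mul_diff_le m n r i j (w F1 F2 : nat -> nat -> R) M :
  (forall h l, is_cell m n h l -> 0 <= w h l /\ Rabs (F1 h l - F2 h l) <= M) ->
  Rabs (nbsum m n r i j (fun h l => w h l * F1 h l) - nbsum m n r i j (fun h l => w h l * F2 h l))
  <= M * nbsum m n r i j w.
Proof.
  intros H. unfold nbsum.
  assert (HL : forall c, In c (cells m n) ->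
             0 <= w (fst c) (snd c) /\ Rabs (F1 (fst c) (snd c) - F2 (fst c) (snd c)) <= M)
    by (intros; apply H, in_cells_is_cell; auto).
  induction (cells m n) as [|c L IH]; simpl.
  { rewrite Rminus_diag, Rabs_R0. lra. }
  destruct (HL c (or_introl eq_refl)) as [Hc HM].
  specialize (IH (fun c0 Hc0 => HL c0 (or_intror Hc0))).
  destruct (in_nbhd r i j (fst c) (snd c)).
  - match goal with |- Rabs (?A + ?B - (?C + ?D)) <= _ =>
      replace (A + B - (C + D)) with ((A - C) + (B - D)) by ring end.
    eapply Rle_trans; [apply Rabs_triang|]. rewrite Rmult_plus_distr_l.
    apply Rplus_le_compat; auto.
    rewrite <- Rmult_minus_distr_l, Rabs_mult, Rabs_pos_eq by auto.
    rewrite Rmult_comm. apply Rmult_le_compat_r; auto.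
  - rewrite !Rplus_0_l. exact IH.
Qed.

Lemma nbsum_nonneg m n r i j (w : nat -> nat -> R) :
  (forall h l, is_cell m n h l -> 0 <= w h l) -> 0 <= nbsum m n r i j w.
Proof.
  intros H. unfold nbsum.
  assert (HL : forall c, In c (cells m n) -> 0 <= w (fst c) (snd c))
    by (intros; apply H, in_cells_is_cell; auto).
  induction (cells m n) as [|c L IH]; simpl; [lra|].
  specialize (IH (fun c0 Hc0 => HL c0 (or_intror Hc0))).
  destruct in_nbhd; [pose proof (HL c (or_introl eq_refl)) |]; lra.
Qed.

Lemma nbsum_mul_0 m n r i j (w : nat -> nat -> R) : nbsum m n r i j (fun h l => w h l * 0) = 0.
Proof.
  unfold nbsum. induction (cells m n) as [|c L IH]; simpl; auto.
  rewrite IH. destruct in_nbhd; ring.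
Qed.

Definition coupling m n r i j (Cij : nat -> nat -> R) (f : R -> R) (v : vec) : R :=
  nbsum m n r i j (fun h l => Cij h l * f (v h l)) * v i j.

Lemma coupling_lipschitz m n r i j (Cij : nat -> nat -> R) (f : R -> R) Mf Lf H (x y : vec) :
  is_cell m n i j -> (forall h l, is_cell m n h l -> 0 <= Cij h l) ->
  (forall u, Rabs (f u) <= Mf) -> 0 <= Lf -> (forall u v, Rabs (f u - f v) <= Lf * Rabs (u - v)) ->
  vnorm m n y <= H ->
  Rabs (coupling m n r i j Cij f x - coupling m n r i j Cij f y)
  <= (Mf + H * Lf) * nbsum m n r i j Cij * vnorm m n (vsub x y).
Proof.
  intros Hij HC Hf HLf Hlip Hy. unfold coupling.
  set (nx := nbsum m n r i j (fun h l => Cij h l * f (x h l))).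
  set (ny := nbsum m n r i j (fun h l => Cij h l * f (y h l))).
  set (Sc := nbsum m n r i j Cij).
  set (z := vnorm m n (vsub x y)).
  assert (HS : 0 <= Sc) by (apply nbsum_nonneg; auto).
  assert (Hz : 0 <= z) by apply vnorm_nonneg.
  assert (Hnx : Rabs nx <= Mf * Sc).
  { pose proof (nbsum_mul_diff_le m n r i j Cij (fun h l => f (x h l)) (fun _ _ => 0) Mf) as H'.
    rewrite nbsum_mul_0, Rminus_0_r in H'. apply H'.
    intros h l Hhl. rewrite Rminus_0_r. auto. }
  assert (Hnxy : Rabs (nx - ny) <= Lf * z * Sc).
  { apply nbsum_mul_diff_le. intros h l Hhl. split; auto.
    eapply Rle_trans; [apply Hlip|].
    apply Rmult_le_compat_l; auto. apply (Rabs_le_vnorm m n (vsub x y) h l Hhl). }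
  assert (Hzij : Rabs (x i j - y i j) <= z) by apply (Rabs_le_vnorm m n (vsub x y) i j Hij).
  assert (Hyij : Rabs (y i j) <= H) by (eapply Rle_trans; [apply Rabs_le_vnorm; eauto | auto]).
  replace (nx * x i j - ny * y i j) with (nx * (x i j - y i j) + (nx - ny) * y i j) by ring.
  eapply Rle_trans; [apply Rabs_triang|]. rewrite !Rabs_mult.
  assert (Rabs nx * Rabs (x i j - y i j) <= Mf * Sc * z)
    by (apply Rmult_le_compat; auto; apply Rabs_pos).
  assert (Rabs (nx - ny) * Rabs (y i j) <= Lf * z * Sc * H)
    by (apply Rmult_le_compat; auto; apply Rabs_pos).
  nra.
Qed.

(** * The time scale *)

Lemma shift_invariant_const (T : Z -> R) : (forall l, T (l + 1)%Z = T l) -> forall l, T l = T 0%Z.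
Proof.
  intros H l. destruct (Z.leb_spec 0 l).
  - replace l with (Z.of_nat (Z.to_nat l)) by lia. induction (Z.to_nat l); auto.
    rewrite Nat2Z.inj_succ, <- Z.add_1_r, H. auto.
  - replace l with (- Z.of_nat (Z.to_nat (- l)))%Z by lia. induction (Z.to_nat (- l)); auto.
    rewrite Nat2Z.inj_succ, <- IHn, <- H. f_equal. lia.
Qed.

Lemma sumn_window_succ (g : Z -> R) l N :
  sumn (fun i => g (l + 1 + Z.of_nat i)%Z) N
  = sumn (fun i => g (l + Z.of_nat i)%Z) N - g l + g (l + Z.of_nat N)%Z.
Proof.
  induction N; cbn [sumn]; [rewrite Z.add_0_r; ring|]. rewrite IHN.
  replace (l + 1 + Z.of_nat N)%Z with (l + Z.of_nat (S N))%Z by lia. ring.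
Qed.

Lemma s_seq_succ theta l : s_seq theta l = s_seq theta (l - 1) + eta theta l.
Proof.
  unfold s_seq, eta. rewrite !sumZ_sumn.
  destruct (Z.leb_spec 0 (l - 1)) as [H1 | H1].
  - assert (H0 : (0 <= l)%Z) by lia. apply Z.leb_le in H0. rewrite H0.
    set (N := Z.to_nat (l - 1)).
    assert (El : l = (Z.of_nat N + 1)%Z) by (unfold N; lia). clearbody N. subst l.
    replace (Z.of_nat N + 1 - 1 - 0 + 1)%Z with (Z.of_nat (S N)) by lia.
    replace (Z.of_nat N + 1 - 1 - 1 - 0 + 1)%Z with (Z.of_nat N) by lia.
    rewrite !Nat2Z.id. cbn [sumn].
    replace (Z.of_nat N + 1 - 1)%Z with (Z.of_nat N) by ring.
    replace (0 + Z.of_nat N)%Z with (Z.of_nat N) by ring.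
    unfold delta. replace (2 * Z.of_nat N + 1)%Z with (2 * (Z.of_nat N + 1) - 1)%Z by ring. ring.
  - destruct (Z.leb_spec 0 l) as [H2 | H2].
    + assert (l = 0)%Z by lia. subst l. simpl. unfold delta. simpl. ring.
    + replace (-1 - l + 1)%Z with (- l)%Z by ring.
      replace (-1 - (l - 1) + 1)%Z with (Z.of_nat (S (Z.to_nat (- l)))) by lia.
      rewrite Nat2Z.id, sumn_shift.
      rewrite (sumn_ext (fun i => delta theta (l - 1 + Z.of_nat (S i)))
                        (fun i => delta theta (l + Z.of_nat i))) by (intros; f_equal; lia).
      replace (l - 1 + Z.of_nat 0)%Z with (l - 1)%Z by lia.
      unfold delta. replace (2 * (l - 1) + 1)%Z with (2 * l - 1)%Z by ring.
      replace (2 * (l - 1))%Z with (2 * l - 2)%Z by ring. ring.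
Qed.

Lemma s_seq_add theta l N :
  s_seq theta (l + Z.of_nat N) = s_seq theta l + sumn (fun i => eta theta (l + 1 + Z.of_nat i)) N.
Proof.
  induction N; [simpl; rewrite Z.add_0_r; ring|].
  cbn [sumn]. rewrite <- Rplus_assoc, <- IHN, (s_seq_succ theta (l + Z.of_nat (S N))).
  replace (l + Z.of_nat (S N) - 1)%Z with (l + Z.of_nat N)%Z by lia.
  replace (l + 1 + Z.of_nat N)%Z with (l + Z.of_nat (S N))%Z by lia. reflexivity.
Qed.

(* [psi_loc theta l] is the paper's psi on the l-th interval [theta_{2l-1}, theta_{2l}]. *)
Definition psi_loc theta (l : Z) (tau : R) : R := s_seq theta l - theta (2 * l)%Z + tau.

Lemma psi_loc_left theta l : psi_loc theta l (theta (2 * l - 1)%Z) = s_seq theta (l - 1).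
Proof. unfold psi_loc. rewrite (s_seq_succ theta l). unfold eta. ring. Qed.

Lemma psi_loc_right theta l : psi_loc theta l (theta (2 * l)%Z) = s_seq theta l.
Proof. unfold psi_loc. ring. Qed.

Lemma psi_loc_bounds theta l tau : theta (2 * l - 1)%Z <= tau <= theta (2 * l)%Z ->
  s_seq theta (l - 1) <= psi_loc theta l tau <= s_seq theta l.
Proof. rewrite <- psi_loc_left, <- psi_loc_right. unfold psi_loc. lra. Qed.

Section TimeScale.

Variable theta : Z -> R.
Hypothesis theta_incr : forall k : Z, theta k < theta (k + 1)%Z.

Lemma theta_lt a b : (a < b)%Z -> theta a < theta b.
Proof.
  intros H. replace b with (a + 1 + Z.of_nat (Z.to_nat (b - a - 1)))%Z by lia.
  induction (Z.to_nat (b - a - 1)); [rewrite Z.add_0_r; auto|].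
  replace (a + 1 + Z.of_nat (S n))%Z with (a + 1 + Z.of_nat n + 1)%Z by lia.
  pose proof (theta_incr (a + 1 + Z.of_nat n)%Z). lra.
Qed.

Lemma interval_index_between k0 N k t :
  theta (2 * k0 - 1)%Z <= t <= theta (2 * (k0 + N))%Z ->
  theta (2 * k - 1)%Z <= t <= theta (2 * k)%Z -> (k0 <= k <= k0 + N)%Z.
Proof.
  intros Ht Hk. split.
  - destruct (Z_le_gt_dec k0 k) as [H | H]; auto.
    pose proof (theta_lt (2 * k) (2 * k0 - 1) ltac:(lia)). lra.
  - destruct (Z_le_gt_dec k (k0 + N)) as [H | H]; auto.
    pose proof (theta_lt (2 * (k0 + N)) (2 * k - 1) ltac:(lia)). lra.
Qed.

Lemma theta_interval l : theta (2 * l - 1)%Z < theta (2 * l)%Z.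
Proof. apply theta_lt. lia. Qed.

Lemma delta_pos k : 0 < delta theta k.
Proof. unfold delta. pose proof (theta_lt (2 * k) (2 * k + 1) ltac:(lia)). lra. Qed.

Lemma eta_pos k : 0 < eta theta k.
Proof. unfold eta. pose proof (theta_interval k). lra. Qed.

Lemma s_seq_pred_lt l : s_seq theta (l - 1) < s_seq theta l.
Proof. rewrite (s_seq_succ theta l). pose proof (eta_pos l). lra. Qed.

Lemma s_seq_le l l' : (l <= l')%Z -> s_seq theta l <= s_seq theta l'.
Proof.
  intros H. replace l' with (l + Z.of_nat (Z.to_nat (l' - l)))%Z by lia. rewrite s_seq_add.
  assert (0 <= sumn (fun i => eta theta (l + 1 + Z.of_nat i)) (Z.to_nat (l' - l)))
    by (apply sumn_nonneg; intros; left; apply eta_pos).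
  lra.
Qed.

Variables (omega : R) (p : nat).
Hypothesis omega_pos : 0 < omega.
Hypothesis theta_periodic : forall k : Z, theta (k + 2 * Z.of_nat p)%Z = theta k + omega.

Lemma period_pos : (1 <= p)%nat.
Proof. destruct p; [|lia]. specialize (theta_periodic 0%Z). simpl in theta_periodic. lra. Qed.

Lemma delta_periodic k : delta theta (k + Z.of_nat p) = delta theta k.
Proof.
  unfold delta. replace (2 * (k + Z.of_nat p) + 1)%Z with (2 * k + 1 + 2 * Z.of_nat p)%Z by ring.
  replace (2 * (k + Z.of_nat p))%Z with (2 * k + 2 * Z.of_nat p)%Z by ring.
  rewrite !theta_periodic. ring.
Qed.

Lemma eta_periodic k : eta theta (k + Z.of_nat p) = eta theta k.
Proof.
  unfold eta. replace (2 * (k + Z.of_nat p) - 1)%Z with (2 * k - 1 + 2 * Z.of_nat p)%Z by ring.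
  replace (2 * (k + Z.of_nat p))%Z with (2 * k + 2 * Z.of_nat p)%Z by ring.
  rewrite !theta_periodic. ring.
Qed.

Lemma sumn_eta_period l : sumn (fun i => eta theta (l + Z.of_nat i)) p = psi_omega theta omega p.
Proof.
  pose proof period_pos as Hp.
  set (T := fun l => sumn (fun i => eta theta (l + Z.of_nat i)) p).
  assert (HT : forall l, T (l + 1)%Z = T l).
  { intros l0. unfold T. rewrite (sumn_window_succ (eta theta)), eta_periodic. ring. }
  change (T l = psi_omega theta omega p). rewrite (shift_invariant_const T HT l), <- (HT 0%Z).
  unfold T, psi_omega. rewrite sumZ_sumn.
  replace (Z.of_nat p - 1 + 1)%Z with (Z.of_nat p) by ring. rewrite Nat2Z.id.
  assert (Htel : forall N, sumn (fun i => eta theta (0 + 1 + Z.of_nat i)) N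
                           + sumn (fun i => delta theta (1 + Z.of_nat i)) N
                         = theta (2 * Z.of_nat N + 1)%Z - theta 1%Z).
  { induction N; [simpl; ring|]. cbn [sumn]. unfold eta, delta in *.
    replace (2 * (0 + 1 + Z.of_nat N) - 1)%Z with (2 * Z.of_nat N + 1)%Z by lia.
    replace (2 * (1 + Z.of_nat N) + 1)%Z with (2 * Z.of_nat (S N) + 1)%Z by lia.
    replace (2 * (1 + Z.of_nat N))%Z with (2 * (0 + 1 + Z.of_nat N))%Z by lia. lra. }
  specialize (Htel p). pose proof (theta_periodic 1%Z).
  replace (1 + 2 * Z.of_nat p)%Z with (2 * Z.of_nat p + 1)%Z in H by ring. lra.
Qed.

Lemma psi_omega_pos : 0 < psi_omega theta omega p.
Proof.
  rewrite <- (sumn_eta_period 0). pose proof period_pos.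
  destruct p; [lia|]. cbn [sumn]. pose proof (eta_pos (0 + Z.of_nat n)).
  assert (0 <= sumn (fun i => eta theta (0 + Z.of_nat i)) n)
    by (apply sumn_nonneg; intros; left; apply eta_pos).
  lra.
Qed.

Lemma s_seq_periods l q :
  s_seq theta (l + Z.of_nat (p * q)) = s_seq theta l + INR q * psi_omega theta omega p.
Proof.
  induction q; [rewrite Nat.mul_0_r; simpl; rewrite Z.add_0_r; ring|].
  replace (l + Z.of_nat (p * S q))%Z with (l + Z.of_nat (p * q) + 1 + Z.of_nat p - 1)%Z by lia.
  replace (l + Z.of_nat (p * q) + 1 + Z.of_nat p - 1)%Z
    with ((l + Z.of_nat (p * q)) + Z.of_nat p)%Z by ring.
  rewrite s_seq_add.
  replace (fun i => eta theta (l + Z.of_nat (p * q) + 1 + Z.of_nat i)) with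
    (fun i : nat => eta theta ((l + Z.of_nat (p * q) + 1) + Z.of_nat i)) by reflexivity.
  rewrite sumn_eta_period, IHq, S_INR. ring.
Qed.

Lemma s_seq_gap l j :
  psi_omega theta omega p * INR (j / p) <= s_seq theta l - s_seq theta (l - Z.of_nat j).
Proof.
  pose proof period_pos.
  assert (Hq : (p * (j / p) <= j)%nat) by (apply Nat.Div0.mul_div_le).
  pose proof (s_seq_periods (l - Z.of_nat (p * (j / p))) (j / p)) as E.
  replace (l - Z.of_nat (p * (j / p)) + Z.of_nat (p * (j / p)))%Z with l in E by ring.
  assert (s_seq theta (l - Z.of_nat j) <= s_seq theta (l - Z.of_nat (p * (j / p))))
    by (apply s_seq_le; lia).
  lra.
Qed.

Lemma delta_le_max k : delta theta k <= delta_max theta p.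
Proof.
  pose proof period_pos as Hp.
  set (P := Z.of_nat p).
  set (j := ((k - 1) mod P + 1)%Z).
  assert (Hj : (1 <= j <= P)%Z) by (unfold j; pose proof (Z.mod_pos_bound (k - 1) P ltac:(lia)); lia).
  assert (Hper : forall q, delta theta (j + P * q) = delta theta j).
  { intros q. rewrite (shift_invariant_const (fun q => delta theta (j + P * q))).
    - simpl. now rewrite Z.mul_0_r, Z.add_0_r.
    - intros q'. replace (j + P * (q' + 1))%Z with (j + P * q' + Z.of_nat p)%Z by (unfold P; ring).
      apply delta_periodic. }
  replace k with (j + P * ((k - 1) / P))%Z
    by (unfold j; pose proof (Z.div_mod (k - 1) P ltac:(lia)); lia).
  rewrite Hper. apply fold_right_Rmax_ge, in_map_iff.
  exists (Z.to_nat j). split; [f_equal; lia|]. apply in_seq. lia.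
Qed.

Lemma delta_max_nonneg : 0 <= delta_max theta p.
Proof. pose proof (delta_le_max 0). pose proof (delta_pos 0). lra. Qed.

End TimeScale.

(** * Variation of constants *)

Lemma exp_le_exp_of_le x y : x <= y -> exp x <= exp y.
Proof. intros [H | H]; [left; apply exp_increasing; auto | subst; lra]. Qed.

Lemma exp_rate_le x lm lam : x <= 0 -> lm <= lam -> exp (lam * x) <= exp (lm * x).
Proof. intros. apply exp_le_exp_of_le. nra. Qed.

Lemma exp_decay_growth mu S T : exp (- mu * (S - T)) = exp (mu * (T - S)).
Proof. f_equal. ring. Qed.

Lemma derivable_pt_lim_exp_affine C mu c x :
  derivable_pt_lim (fun y => C * exp (mu * (y + c))) x (C * (mu * exp (mu * (x + c)))).
Proof.
  assert (Haff : derivable_pt_lim (fun y => mu * (y + c)) x mu).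
  { intros eps Heps. exists (mkposreal 1 Rlt_0_1). intros h Hh _.
    replace ((mu * (x + h + c) - mu * (x + c)) / h - mu) with 0 by (field; auto).
    rewrite Rabs_R0; auto. }
  pose proof (derivable_pt_lim_scal _ C x _
                (derivable_pt_lim_comp _ exp x _ _ Haff (derivable_pt_lim_exp _))) as H.
  replace (C * (mu * exp (mu * (x + c)))) with (C * (exp (mu * (x + c)) * mu)) by ring.
  exact H.
Qed.

Lemma derivable_pt_lim_exp_psi_loc theta C mu c l x :
  derivable_pt_lim (fun y => C * exp (mu * (psi_loc theta l y - c))) x
                   (C * mu * exp (mu * (psi_loc theta l x - c))).
Proof.
  set (c' := s_seq theta l - theta (2 * l)%Z - c).
  apply derivable_pt_lim_ext with (fun y => C * exp (mu * (y + c'))).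
  { intros y. unfold c', psi_loc. do 3 f_equal. ring. }
  replace (mu * (psi_loc theta l x - c)) with (mu * (x + c')) by (unfold c', psi_loc; ring).
  rewrite Rmult_assoc. apply derivable_pt_lim_exp_affine.
Qed.

(* [comparison_bound] is the discrete Gronwall bound
   A e^{(d - lm)(psi - s_{k1-1})} prod_{k1 <= nu < l} (1 + delta_nu d) on the l-th interval;
   [scaled_bound] is e^{lm psi} times it. *)
Definition scaled_bound theta (lm d A : R) (k1 l : Z) (tau : R) : R :=
  A * exp (lm * s_seq theta (k1 - 1))
  * prodn (fun i => 1 + delta theta (k1 + Z.of_nat i) * d) (Z.to_nat (l - k1))
  * exp (d * (psi_loc theta l tau - s_seq theta (k1 - 1))).

Definition comparison_bound theta (lm d A : R) (k1 l : Z) (tau : R) : R :=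
  exp (- lm * psi_loc theta l tau) * scaled_bound theta lm d A k1 l tau.

Section ComparisonBound.

Variable theta : Z -> R.
Hypothesis theta_incr : forall k : Z, theta k < theta (k + 1)%Z.
Variables (lm d A : R) (k1 : Z).
Hypotheses (d_nonneg : 0 <= d) (A_nonneg : 0 <= A).

Lemma scaled_bound_nonneg l tau : 0 <= scaled_bound theta lm d A k1 l tau.
Proof.
  unfold scaled_bound.
  assert (0 < prodn (fun i => 1 + delta theta (k1 + Z.of_nat i) * d) (Z.to_nat (l - k1))).
  { apply prodn_pos. intros i. pose proof (delta_pos theta theta_incr (k1 + Z.of_nat i)). nra. }
  pose proof (exp_pos (lm * s_seq theta (k1 - 1))).
  pose proof (exp_pos (d * (psi_loc theta l tau - s_seq theta (k1 - 1)))).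
  apply Rmult_le_pos; [apply Rmult_le_pos; [apply Rmult_le_pos|] |]; lra.
Qed.

Lemma comparison_bound_nonneg l tau : 0 <= comparison_bound theta lm d A k1 l tau.
Proof.
  unfold comparison_bound. apply Rmult_le_pos; [left; apply exp_pos | apply scaled_bound_nonneg].
Qed.

End ComparisonBound.

Lemma scaled_bound_jump theta lm d A k1 l : (k1 <= l)%Z ->
  scaled_bound theta lm d A k1 (l + 1) (theta (2 * l + 1)%Z)
  = scaled_bound theta lm d A k1 l (theta (2 * l)%Z) * (1 + delta theta l * d).
Proof.
  intros H. unfold scaled_bound.
  replace (2 * l + 1)%Z with (2 * (l + 1) - 1)%Z by ring.
  rewrite psi_loc_left, psi_loc_right. replace (l + 1 - 1)%Z with l by ring.
  replace (Z.to_nat (l + 1 - k1)) with (S (Z.to_nat (l - k1))) by lia. cbn [prodn].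
  replace (k1 + Z.of_nat (Z.to_nat (l - k1)))%Z with l by lia. ring.
Qed.

(* Variation of constants for one cell: g' = -a g + (D + a g) on the intervals and
   g(theta_{2l+1}) = (1 - delta_l a) g(theta_{2l}) + delta_l e_l at the jumps. *)
Section VariationOfConstants.

Variable theta : Z -> R.
Hypothesis theta_incr : forall k : Z, theta k < theta (k + 1)%Z.
Variables (a K lam lm d A P Q : R) (k1 k : Z) (t : R).
Variables (g : R -> R) (D : Z -> R -> R) (e : Z -> R).
Hypothesis k1_le_k : (k1 <= k)%Z.
Hypothesis t_in : theta (2 * k - 1)%Z <= t <= theta (2 * k)%Z.
Hypotheses (lam_pos : 0 < lam) (lm_le_lam : lm <= lam).
Hypotheses (K_nonneg : 0 <= K) (P_nonneg : 0 <= P) (Q_nonneg : 0 <= Q).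
Hypotheses (d_nonneg : 0 <= d) (A_nonneg : 0 <= A) (KP_le_d : K * P <= d).

Hypothesis fundamental_bound : forall l T, (k1 <= l <= k)%Z ->
  s_seq theta (l - 1) <= T <= s_seq theta l -> T <= psi_loc theta k t ->
  Rabs (exp (- a * (psi_loc theta k t - T)) * prodZ (fun nu => 1 - delta theta nu * a) l (k - 1))
  <= K * exp (- lam * (psi_loc theta k t - T)).
Hypothesis g_deriv : forall l tau, (k1 <= l <= k)%Z ->
  theta (2 * l - 1)%Z <= tau <= theta (2 * l)%Z ->
  deriv_within g (theta (2 * l - 1)%Z) (theta (2 * l)%Z) tau (D l tau).
Hypothesis g_jump : forall l, (k1 <= l < k)%Z ->
  g (theta (2 * l + 1)%Z) = (1 - delta theta l * a) * g (theta (2 * l)%Z) + delta theta l * e l.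
Hypothesis D_bound : forall l tau, (k1 <= l <= k)%Z ->
  theta (2 * l - 1)%Z < tau < theta (2 * l)%Z ->
  Rabs (D l tau + a * g tau) <= P * comparison_bound theta lm d A k1 l tau + Q.
Hypothesis e_bound : forall l, (k1 <= l < k)%Z ->
  Rabs (e l) <= P * comparison_bound theta lm d A k1 l (theta (2 * l)%Z) + Q.
Hypothesis initial_bound : K * Rabs (g (theta (2 * k1 - 1)%Z)) <= A.

Local Notation st := (psi_loc theta k t).
Local Notation s0 := (s_seq theta (k1 - 1)).
Local Notation B := (comparison_bound theta lm d A k1).
Local Notation V := (scaled_bound theta lm d A k1).
Local Notation Pr l := (prodZ (fun nu => 1 - delta theta nu * a) l (k - 1)).
(* [q l tau] is g weighted by the fundamental solution from tau to t. *)
Local Notation q l tau := (exp (a * (psi_loc theta l tau - st)) * Pr l * g tau).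
(* G dominates the growth of q within an interval; W collects the jumps and earlier intervals. *)
Local Notation G l tau :=
  (K * Q / lam * exp (lam * (psi_loc theta l tau - st)) + exp (- lm * st) * V l tau).
Local Notation Sum l :=
  (sumn (fun i => delta theta (k1 + Z.of_nat i) * exp (lam * (s_seq theta (k1 + Z.of_nat i) - st)))
        (Z.to_nat (l - k1))).
Local Notation W l :=
  (K * Q / lam * (exp (lam * (s_seq theta (l - 1) - st)) - exp (lam * (s0 - st))) + K * Q * Sum l).

Lemma s_seq_le_st l : (l <= k - 1)%Z -> s_seq theta l <= st.
Proof.
  intros Hl. pose proof (psi_loc_bounds theta k t t_in).
  pose proof (s_seq_le theta theta_incr l (k - 1) Hl). lra.
Qed.

Lemma weight_bound l T : (k1 <= l <= k)%Z -> s_seq theta (l - 1) <= T <= s_seq theta l -> T <= st ->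
  Rabs (exp (a * (T - st)) * Pr l) <= K * exp (lam * (T - st)).
Proof. intros. rewrite <- (exp_decay_growth a), <- (exp_decay_growth lam). apply fundamental_bound; auto. Qed.

Lemma comparison_bound_weighted l tau :
  exp (lm * (psi_loc theta l tau - st)) * B l tau = exp (- lm * st) * V l tau.
Proof.
  unfold comparison_bound. rewrite <- Rmult_assoc, <- exp_plus.
  replace (lm * (psi_loc theta l tau - st) + - lm * psi_loc theta l tau) with (- lm * st) by ring.
  reflexivity.
Qed.

Lemma kernel_forcing_le u B0 : u <= 0 -> 0 <= B0 ->
  K * exp (lam * u) * (P * B0 + Q) <= d * (exp (lm * u) * B0) + K * Q * exp (lam * u).
Proof.
  intros Hu HB0. pose proof (exp_rate_le u lm lam Hu lm_le_lam).
  assert (K * exp (lam * u) * (P * B0) <= d * (exp (lm * u) * B0)).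
  { replace (K * exp (lam * u) * (P * B0)) with ((K * P) * (exp (lam * u) * B0)) by ring.
    apply Rmult_le_compat; [apply Rmult_le_pos | apply Rmult_le_pos; [left; apply exp_pos|] | |
                            apply Rmult_le_compat_r]; lra. }
  lra.
Qed.

Lemma G_derivative l s : derivable_pt_lim (fun tau => G l tau) s
  (K * Q * exp (lam * (psi_loc theta l s - st)) + d * (exp (- lm * st) * V l s)).
Proof.
  apply derivable_pt_lim_plus.
  - replace (K * Q * exp (lam * (psi_loc theta l s - st)))
      with (K * Q / lam * lam * exp (lam * (psi_loc theta l s - st))) by (field; lra).
    apply derivable_pt_lim_exp_psi_loc.
  - set (c := exp (- lm * st) * (A * exp (lm * s0)
                * prodn (fun i => 1 + delta theta (k1 + Z.of_nat i) * d) (Z.to_nat (l - k1)))).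
    apply derivable_pt_lim_ext with (fun y => c * exp (d * (psi_loc theta l y - s0))).
    { intros y. unfold c, scaled_bound. ring. }
    replace (d * (exp (- lm * st) * V l s)) with (c * d * exp (d * (psi_loc theta l s - s0)))
      by (unfold c, scaled_bound; ring).
    apply derivable_pt_lim_exp_psi_loc.
Qed.

Lemma weighted_rate_le l s : (k1 <= l <= k)%Z -> theta (2 * l - 1)%Z < s < theta (2 * l)%Z ->
  psi_loc theta l s <= st ->
  Rabs (exp (a * (psi_loc theta l s - st)) * Pr l * (D l s + a * g s))
  <= K * Q * exp (lam * (psi_loc theta l s - st)) + d * (exp (- lm * st) * V l s).
Proof.
  intros Hl Hs HsS.
  pose proof (weight_bound l (psi_loc theta l s) Hl ltac:(apply psi_loc_bounds; lra) HsS).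
  pose proof (D_bound l s Hl Hs).
  pose proof (comparison_bound_nonneg theta theta_incr lm d A k1 d_nonneg A_nonneg l s).
  rewrite <- (comparison_bound_weighted l s), Rabs_mult.
  eapply Rle_trans; [apply Rmult_le_compat; [apply Rabs_pos | apply Rabs_pos | eassumption | eassumption]|].
  pose proof (kernel_forcing_le (psi_loc theta l s - st) (B l s) ltac:(lra) ltac:(lra)). lra.
Qed.

Lemma q_interval_increment l x : (k1 <= l <= k)%Z ->
  theta (2 * l - 1)%Z <= x <= theta (2 * l)%Z -> (l = k -> x <= t) ->
  Rabs (q l x - q l (theta (2 * l - 1)%Z)) <= G l x - G l (theta (2 * l - 1)%Z).
Proof.
  intros Hl Hx Hxt.
  apply (weighted_increment_le (fun tau => exp (a * (psi_loc theta l tau - st)) * Pr l)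
           (fun tau => a * (exp (a * (psi_loc theta l tau - st)) * Pr l)) g (D l) (fun tau => G l tau)
           (fun tau => K * Q * exp (lam * (psi_loc theta l tau - st)) + d * (exp (- lm * st) * V l tau))
           _ (theta (2 * l)%Z)); [apply theta_interval; auto | exact Hx | | apply G_derivative | | ].
  - intros s. apply derivable_pt_lim_ext with (fun y => Pr l * exp (a * (psi_loc theta l y - st))).
    { intros y. ring. }
    replace (a * (exp (a * (psi_loc theta l s - st)) * Pr l))
      with (Pr l * a * exp (a * (psi_loc theta l s - st))) by ring.
    apply derivable_pt_lim_exp_psi_loc.
  - intros s Hs. apply g_deriv; auto.
  - intros s Hs.
    replace (a * (exp (a * (psi_loc theta l s - st)) * Pr l) * g s
             + exp (a * (psi_loc theta l s - st)) * Pr l * D l s)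
      with (exp (a * (psi_loc theta l s - st)) * Pr l * (D l s + a * g s)) by ring.
    apply weighted_rate_le; auto; [lra|].
    destruct (Z.eq_dec l k) as [-> | Hlk].
    + unfold psi_loc. specialize (Hxt eq_refl). lra.
    + pose proof (s_seq_le_st l ltac:(lia)). pose proof (psi_loc_bounds theta l s). lra.
Qed.

Lemma q_jump l : (k1 <= l < k)%Z ->
  q (l + 1)%Z (theta (2 * l + 1)%Z)
  = q l (theta (2 * l)%Z) + exp (a * (s_seq theta l - st)) * Pr (l + 1)%Z * (delta theta l * e l).
Proof.
  intros Hl.
  assert (E : psi_loc theta (l + 1) (theta (2 * l + 1)%Z) = s_seq theta l).
  { replace (2 * l + 1)%Z with (2 * (l + 1) - 1)%Z by ring.
    rewrite psi_loc_left. f_equal. ring. }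
  rewrite E, psi_loc_right, g_jump, (prodZ_split _ l (k - 1)) by lia. ring.
Qed.

Lemma jump_term_le l : (k1 <= l < k)%Z ->
  Rabs (exp (a * (s_seq theta l - st)) * Pr (l + 1)%Z * (delta theta l * e l))
  <= delta theta l * (d * (exp (- lm * st) * V l (theta (2 * l)%Z)))
     + K * Q * (delta theta l * exp (lam * (s_seq theta l - st))).
Proof.
  intros Hl.
  assert (HlS : s_seq theta l <= st) by (apply s_seq_le_st; lia).
  assert (Hw : Rabs (exp (a * (s_seq theta l - st)) * Pr (l + 1)%Z)
               <= K * exp (lam * (s_seq theta l - st))).
  { apply weight_bound; [lia | | exact HlS]. replace (l + 1 - 1)%Z with l by ring.
    pose proof (s_seq_le theta theta_incr l (l + 1) ltac:(lia)). lra. }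
  pose proof (e_bound l Hl).
  pose proof (delta_pos theta theta_incr l).
  pose proof (comparison_bound_nonneg theta theta_incr lm d A k1 d_nonneg A_nonneg l
                (theta (2 * l)%Z)).
  pose proof (comparison_bound_weighted l (theta (2 * l)%Z)) as HBw. rewrite psi_loc_right in HBw.
  rewrite <- HBw, Rabs_mult, (Rabs_mult (delta theta l)), (Rabs_pos_eq (delta theta l)) by lra.
  eapply Rle_trans.
  { apply Rmult_le_compat; [apply Rabs_pos | apply Rmult_le_pos; [lra | apply Rabs_pos] | exact Hw |].
    apply Rmult_le_compat_l; [lra | eassumption]. }
  pose proof (kernel_forcing_le (s_seq theta l - st) (comparison_bound theta lm d A k1 l (theta (2 * l)%Z))
                ltac:(lra) ltac:(lra)).
  nra.
Qed.

Lemma G_increment l :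
  G l (theta (2 * l)%Z) - G l (theta (2 * l - 1)%Z)
  = K * Q / lam * (exp (lam * (s_seq theta l - st)) - exp (lam * (s_seq theta (l - 1) - st)))
    + exp (- lm * st) * (V l (theta (2 * l)%Z) - V l (theta (2 * l - 1)%Z)).
Proof. rewrite psi_loc_left, psi_loc_right. ring. Qed.

Lemma W_succ l : (k1 <= l)%Z ->
  W (l + 1)%Z = W l + K * Q / lam * (exp (lam * (s_seq theta l - st))
                                     - exp (lam * (s_seq theta (l - 1) - st)))
                + K * Q * (delta theta l * exp (lam * (s_seq theta l - st))).
Proof.
  intros Hl. replace (l + 1 - 1)%Z with l by ring.
  replace (Z.to_nat (l + 1 - k1)) with (S (Z.to_nat (l - k1))) by lia. cbn [sumn].
  replace (k1 + Z.of_nat (Z.to_nat (l - k1)))%Z with l by lia. ring.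
Qed.

Lemma q_left_bound j : (j <= Z.to_nat (k - k1))%nat ->
  Rabs (q (k1 + Z.of_nat j)%Z (theta (2 * (k1 + Z.of_nat j) - 1)%Z))
  <= exp (- lm * st) * V (k1 + Z.of_nat j)%Z (theta (2 * (k1 + Z.of_nat j) - 1)%Z)
     + W (k1 + Z.of_nat j)%Z.
Proof.
  induction j as [|j IH]; intros Hj.
  - rewrite Z.add_0_r, psi_loc_left. unfold scaled_bound. rewrite psi_loc_left.
    replace (k1 - k1)%Z with 0%Z by ring. cbn [sumn prodn Z.to_nat].
    assert (Hs0 : s0 <= st) by (apply s_seq_le_st; lia).
    assert (Hw : Rabs (exp (a * (s0 - st)) * Pr k1) <= K * exp (lam * (s0 - st))).
    { apply weight_bound; [lia | | exact Hs0].
      pose proof (s_seq_le theta theta_incr (k1 - 1) k1 ltac:(lia)). lra. }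
    pose proof (exp_rate_le (s0 - st) lm lam ltac:(lra) lm_le_lam).
    pose proof (exp_pos (lam * (s0 - st))).
    assert (HV0 : exp (- lm * st) * (A * exp (lm * s0) * 1 * exp (d * (s0 - s0)))
                  = A * exp (lm * (s0 - st))).
    { rewrite Rminus_diag, Rmult_0_r, exp_0.
      replace (lm * (s0 - st)) with (- lm * st + lm * s0) by ring. rewrite exp_plus. ring. }
    rewrite HV0.
    rewrite Rabs_mult. eapply Rle_trans.
    { apply Rmult_le_compat_r; [apply Rabs_pos | exact Hw]. }
    nra.
  - set (l := (k1 + Z.of_nat j)%Z) in *.
    assert (Hl : (k1 <= l < k)%Z) by (unfold l; lia).
    specialize (IH ltac:(lia)).
    replace (k1 + Z.of_nat (S j))%Z with (l + 1)%Z by (unfold l; lia).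
    replace (2 * (l + 1) - 1)%Z with (2 * l + 1)%Z by ring.
    rewrite q_jump, W_succ by lia.
    pose proof (q_interval_increment l (theta (2 * l)%Z) ltac:(lia)
                  ltac:(pose proof (theta_interval theta theta_incr l); lra) ltac:(lia)) as Hc.
    rewrite G_increment in Hc.
    pose proof (jump_term_le l Hl) as HJ.
    assert (HV : exp (- lm * st) * V (l + 1)%Z (theta (2 * l + 1)%Z)
                 = exp (- lm * st) * V l (theta (2 * l)%Z)
                   + delta theta l * (d * (exp (- lm * st) * V l (theta (2 * l)%Z))))
      by (rewrite scaled_bound_jump by lia; ring).
    rewrite HV.
    pose proof (Rabs_triang_inv (q l (theta (2 * l)%Z)) (q l (theta (2 * l - 1)%Z))).
    eapply Rle_trans; [apply Rabs_triang|]. lra.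
Qed.

Lemma variation_of_constants_bound :
  Rabs (g t) <= B k t + K * Q / lam + K * Q * Sum k.
Proof.
  pose proof (q_left_bound (Z.to_nat (k - k1)) (le_n _)) as Hleft.
  replace (k1 + Z.of_nat (Z.to_nat (k - k1)))%Z with k in Hleft by lia.
  pose proof (q_interval_increment k t ltac:(lia) t_in ltac:(lra)) as Hc.
  rewrite prodZ_empty in Hc, Hleft. rewrite !Rminus_diag, !Rmult_0_r, !exp_0, psi_loc_left in Hc.
  rewrite psi_loc_left in Hleft.
  assert (HB : B k t = exp (- lm * st) * V k t) by reflexivity.
  assert (0 <= K * Q / lam * exp (lam * (s0 - st))).
  { apply Rmult_le_pos; [apply Rmult_le_pos; [apply Rmult_le_pos; auto | left; apply Rinv_0_lt_compat; auto]
                        | left; apply exp_pos]. }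
  rewrite !Rmult_1_l, !Rmult_1_r in *.
  pose proof (Rabs_triang_inv (g t) (exp (a * (s_seq theta (k - 1) - st)) * g (theta (2 * k - 1)%Z))).
  lra.
Qed.

End VariationOfConstants.

(** * The Green kernel *)

Lemma nonneg_of_nonneg_nearby (phi : R -> R) x e0 : 0 < e0 -> continuity_pt phi x ->
  (forall e, 0 < e < e0 -> exists y, Rabs (y - x) <= e /\ 0 <= phi y) -> 0 <= phi x.
Proof.
  intros He0 Hc Hnear. destruct (Rle_or_lt 0 (phi x)) as [|Hneg]; auto. exfalso.
  unfold continuity_pt, continue_in, limit1_in, limit_in in Hc; simpl in Hc; unfold R_dist in Hc.
  destruct (Hc (- phi x) ltac:(lra)) as [alp [Halp Hclose]].
  set (e := Rmin alp e0 / 2).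
  assert (He : 0 < e) by (unfold e; apply Rdiv_lt_0_compat; [apply Rmin_pos |]; lra).
  assert (Hea : e < alp) by (unfold e; pose proof (Rmin_l alp e0); lra).
  assert (Hee : e < e0) by (unfold e; pose proof (Rmin_r alp e0); lra).
  destruct (Hnear e (conj He Hee)) as [y [Hy Hphi]].
  destruct (Req_dec y x) as [-> | Hyx]; [lra|].
  assert (Rabs (phi y - phi x) < - phi x) by (apply Hclose; split; [split; [exact I | auto] | lra]).
  pose proof (Rle_abs (phi y - phi x)). lra.
Qed.

Lemma continuity_pt_kernel_gap K lam a Pr x :
  continuity_pt (fun x => K * exp (- lam * x) - Rabs (exp (- a * x) * Pr)) x.
Proof.
  apply continuity_pt_minus.
  - apply derivable_continuous_pt. reg.
  - apply (continuity_pt_comp (fun x => exp (- a * x) * Pr) Rabs); [| apply Rcontinuity_abs].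
    apply derivable_continuous_pt. reg.
Qed.

(* (C2)'s bound on the fundamental solution u_ij, stated in the paper for tau in (s_{l-1}, s_l]
   and s in (s_k, s_{k+1}], extends by continuity to closed intervals. *)
Lemma u_bound_closed theta (theta_incr : forall k : Z, theta k < theta (k + 1)%Z)
  omega p a K : u_bound theta omega p a K ->
  forall l k T S, (l <= k)%Z ->
    s_seq theta (l - 1) <= T <= s_seq theta l -> s_seq theta (k - 1) <= S <= s_seq theta k ->
    T <= S ->
    Rabs (exp (- a * (S - T)) * prodZ (fun nu => 1 - delta theta nu * a) l (k - 1))
    <= K * exp (- lambda_ij theta omega p a * (S - T)).
Proof.
  intros Hu l k T S Hlk HT HS HTS.
  set (Pr := prodZ (fun nu => 1 - delta theta nu * a) l (k - 1)).
  set (lam := lambda_ij theta omega p a).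
  set (phi := fun x => K * exp (- lam * x) - Rabs (exp (- a * x) * Pr)).
  assert (Hat : forall T' S', s_seq theta (l - 1) < T' <= s_seq theta l ->
                  s_seq theta (k - 1) < S' <= s_seq theta k -> T' <= S' -> 0 <= phi (S' - T')).
  { intros T' S' HT' HS' HTS'. unfold phi.
    pose proof (Hu l (k - 1)%Z T' S' HT' ltac:(replace (k - 1 + 1)%Z with k by ring; lra) HTS').
    fold Pr lam in H. lra. }
  pose proof (continuity_pt_kernel_gap K lam a Pr (S - T)) as Hc. fold phi in Hc.
  pose proof (s_seq_pred_lt theta theta_incr l) as Hl.
  pose proof (s_seq_pred_lt theta theta_incr k) as Hk.
  enough (Hphi : 0 <= phi (S - T)) by (unfold phi in Hphi; lra).
  assert (Hclose : forall y e, 0 < e -> y = S - T \/ y = S - T - e \/ y = S - T + e ->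
                     Rabs (y - (S - T)) <= e)
    by (intros y e He [-> | [-> | ->]]; unfold Rabs; destruct Rcase_abs; lra).
  (* Move T and S to the right when they sit at the excluded left endpoints. *)
  destruct (Req_dec T (s_seq theta (l - 1))) as [ET | ET];
    destruct (Req_dec S (s_seq theta (k - 1))) as [ES | ES].
  - set (e0 := Rmin (s_seq theta l - s_seq theta (l - 1)) (s_seq theta k - s_seq theta (k - 1))).
    apply (nonneg_of_nonneg_nearby phi _ e0); [apply Rmin_pos; lra | exact Hc |].
    intros e He. exists ((S + e) - (T + e)).
    assert (e0 <= s_seq theta l - s_seq theta (l - 1)) by apply Rmin_l.
    assert (e0 <= s_seq theta k - s_seq theta (k - 1)) by apply Rmin_r.
    split; [apply Hclose; [lra | left; ring] | apply Hat; lra].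
  - assert (HST : T < S) by (pose proof (s_seq_le theta theta_incr (l - 1) (k - 1) ltac:(lia)); lra).
    set (e0 := Rmin (s_seq theta l - s_seq theta (l - 1)) (S - T)).
    apply (nonneg_of_nonneg_nearby phi _ e0); [apply Rmin_pos; lra | exact Hc |].
    intros e He. exists (S - (T + e)).
    assert (e0 <= s_seq theta l - s_seq theta (l - 1)) by apply Rmin_l.
    assert (e0 <= S - T) by apply Rmin_r.
    split; [apply Hclose; [lra | right; left; ring] | apply Hat; lra].
  - apply (nonneg_of_nonneg_nearby phi _ (s_seq theta k - s_seq theta (k - 1))); [lra | exact Hc |].
    intros e He. exists ((S + e) - T).
    split; [apply Hclose; [lra | right; right; ring] | apply Hat; lra].
  - apply (nonneg_of_nonneg_nearby phi _ 1); [lra | exact Hc |].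
    intros e He. exists (S - T).
    split; [apply Hclose; [lra | left; ring] | apply Hat; lra].
Qed.

Lemma exp_INR_mult q y : exp (INR q * y) = exp y ^ q.
Proof.
  rewrite <- (exp_ln (exp y ^ q)) by (apply pow_lt, exp_pos).
  rewrite ln_pow, ln_exp by apply exp_pos. reflexivity.
Qed.

Lemma sumn_geometric_le r M : 0 <= r < 1 -> sumn (fun q => r ^ q) M <= 1 / (1 - r).
Proof.
  intros Hr.
  assert (E : (1 - r) * sumn (fun q => r ^ q) M = 1 - r ^ M).
  { induction M; cbn [sumn]; [simpl; ring|]. rewrite Rmult_plus_distr_l, IHM. simpl. ring. }
  pose proof (pow_le r M (proj1 Hr)).
  apply (Rmult_le_reg_l (1 - r)); [lra|]. rewrite E. field_simplify; lra.
Qed.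

Lemma sumn_pow_div_block r p M : (1 <= p)%nat ->
  sumn (fun j => r ^ (j / p)) (p * M) = INR p * sumn (fun q => r ^ q) M.
Proof.
  intros Hp. induction M; [rewrite Nat.mul_0_r; simpl; ring|].
  replace (p * S M)%nat with (p * M + p)%nat by lia. rewrite sumn_add, IHM.
  rewrite (sumn_ext (fun i => r ^ ((p * M + i) / p)) (fun _ => r ^ M) p).
  - rewrite sumn_const. cbn [sumn]. ring.
  - intros i Hi. f_equal. rewrite Nat.mul_comm, Nat.div_add_l, Nat.div_small by lia. lia.
Qed.

Lemma sumn_pow_div_le r p n : (1 <= p)%nat -> 0 <= r < 1 ->
  sumn (fun j => r ^ (j / p)) n <= INR p / (1 - r).
Proof.
  intros Hp Hr. eapply Rle_trans.
  { apply (sumn_le_more _ n (p * n)); [nia | intros; apply pow_le; lra]. }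
  rewrite sumn_pow_div_block by auto.
  pose proof (sumn_geometric_le r n Hr). pose proof (pos_INR p).
  replace (INR p / (1 - r)) with (INR p * (1 / (1 - r))) by (field; lra).
  apply Rmult_le_compat_l; auto.
Qed.

(* Among the points s_{k1+i} below S, at most p lie in each window of length psi(omega). *)
Lemma sumn_delta_exp_le theta (theta_incr : forall k : Z, theta k < theta (k + 1)%Z)
  omega p (omega_pos : 0 < omega)
  (theta_periodic : forall k : Z, theta (k + 2 * Z.of_nat p)%Z = theta k + omega)
  lam k1 n S : 0 < lam -> s_seq theta (k1 + Z.of_nat n - 1) <= S ->
  sumn (fun i => delta theta (k1 + Z.of_nat i) * exp (lam * (s_seq theta (k1 + Z.of_nat i) - S))) n
  <= INR p * delta_max theta p / (1 - exp (- lam * psi_omega theta omega p)).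
Proof.
  intros Hlam HS.
  pose proof (period_pos theta omega p omega_pos theta_periodic) as Hp.
  pose proof (psi_omega_pos theta theta_incr omega p omega_pos theta_periodic) as HPsi.
  pose proof (delta_max_nonneg theta theta_incr omega p omega_pos theta_periodic) as Hdm.
  set (r := exp (- lam * psi_omega theta omega p)).
  assert (Hr : 0 <= r < 1).
  { unfold r. split; [left; apply exp_pos|]. rewrite <- exp_0. apply exp_increasing. nra. }
  eapply Rle_trans.
  { apply (sumn_le _ (fun i => delta_max theta p * r ^ ((n - 1 - i) / p))).
    intros i Hi. apply Rmult_le_compat; [left; apply delta_pos; auto | left; apply exp_pos
                                        | apply delta_le_max with omega; auto |].
    unfold r. rewrite <- exp_INR_mult. apply exp_le_exp_of_le.
    pose proof (s_seq_gap theta theta_incr omega p omega_pos theta_periodic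
                  (k1 + Z.of_nat n - 1) (n - 1 - i)) as Hgap.
    replace (k1 + Z.of_nat n - 1 - Z.of_nat (n - 1 - i))%Z with (k1 + Z.of_nat i)%Z in Hgap by lia.
    nra. }
  rewrite sumn_scal, (sumn_rev (fun j => r ^ (j / p)) n).
  pose proof (sumn_pow_div_le r p n Hp Hr).
  replace (INR p * delta_max theta p / (1 - r)) with (delta_max theta p * (INR p / (1 - r)))
    by (field; lra).
  apply Rmult_le_compat_l; auto.
Qed.

Lemma kernel_mass_le_coefK theta (theta_incr : forall k : Z, theta k < theta (k + 1)%Z)
  omega p (omega_pos : 0 < omega)
  (theta_periodic : forall k : Z, theta (k + 2 * Z.of_nat p)%Z = theta k + omega)
  a Kij Q k1 k t : 0 < lambda_ij theta omega p a -> 0 <= Kij -> 0 <= Q -> (k1 <= k)%Z ->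
  theta (2 * k - 1)%Z <= t <= theta (2 * k)%Z ->
  Kij * Q / lambda_ij theta omega p a
  + Kij * Q * sumn (fun i => delta theta (k1 + Z.of_nat i)
                             * exp (lambda_ij theta omega p a
                                    * (s_seq theta (k1 + Z.of_nat i) - psi_loc theta k t)))
                   (Z.to_nat (k - k1))
  <= Q * coefK theta omega p a Kij.
Proof.
  intros Hlam HK HQ Hk Ht.
  pose proof (sumn_delta_exp_le theta theta_incr omega p omega_pos theta_periodic
                (lambda_ij theta omega p a) k1 (Z.to_nat (k - k1)) (psi_loc theta k t) Hlam) as Hsum.
  replace (k1 + Z.of_nat (Z.to_nat (k - k1)) - 1)%Z with (k - 1)%Z in Hsum by lia.
  specialize (Hsum (proj1 (psi_loc_bounds theta k t Ht))).
  apply (Rmult_le_compat_l (Kij * Q)) in Hsum; [| apply Rmult_le_pos; lra].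
  unfold coefK.
  replace (Q * (Kij / lambda_ij theta omega p a
                + INR p * delta_max theta p * Kij
                  / (1 - exp (- lambda_ij theta omega p a * psi_omega theta omega p))))
    with (Kij * Q / lambda_ij theta omega p a
          + Kij * Q * (INR p * delta_max theta p
                       / (1 - exp (- lambda_ij theta omega p a * psi_omega theta omega p))))
    by (unfold Rdiv; ring).
  lra.
Qed.

(** * Decay of the Gronwall bound and continuity along orbits *)

Lemma count_bounds_of_gap Psi X N M p : 0 < Psi -> (1 <= p)%nat -> (p * M <= N)%nat ->
  Psi * INR (N / p) <= X -> Psi * INR M <= X /\ INR N <= INR p * (X / Psi) + INR p.
Proof.
  intros HPsi Hp HMN Hgap. split.
  - assert (HNM : (M <= N / p)%nat) by (apply Nat.div_le_lower_bound; lia).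
    apply le_INR in HNM. nra.
  - pose proof (Nat.div_mod N p ltac:(lia)). pose proof (Nat.mod_upper_bound N p ltac:(lia)).
    assert (INR N = INR p * INR (N / p) + INR (N mod p))
      by (rewrite <- mult_INR, <- plus_INR; f_equal; lia).
    assert (INR (N mod p) <= INR p) by (apply le_INR; lia).
    assert (INR (N / p) <= X / Psi).
    { apply (Rmult_le_reg_l Psi); auto. replace (Psi * (X / Psi)) with X by (field; lra). lra. }
    pose proof (pos_INR p). nra.
Qed.

Section Decay.

Variable theta : Z -> R.
Hypothesis theta_incr : forall k : Z, theta k < theta (k + 1)%Z.
Variables (omega : R) (p : nat).
Hypothesis omega_pos : 0 < omega.
Hypothesis theta_periodic : forall k : Z, theta (k + 2 * Z.of_nat p)%Z = theta k + omega.
Variables (lm d A : R).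
Hypotheses (d_nonneg : 0 <= d) (A_nonneg : 0 <= A).

Local Notation Psi := (psi_omega theta omega p).
Local Notation Lg := (ln (1 + delta_max theta p * d)).

Lemma jump_product_le k1 N :
  prodn (fun i => 1 + delta theta (k1 + Z.of_nat i) * d) N <= exp (INR N * Lg).
Proof.
  pose proof (delta_max_nonneg theta theta_incr omega p omega_pos theta_periodic).
  rewrite exp_INR_mult, exp_ln by nra.
  apply prodn_le_pow. intros i Hi.
  pose proof (delta_pos theta theta_incr (k1 + Z.of_nat i)).
  pose proof (delta_le_max theta omega p omega_pos theta_periodic (k1 + Z.of_nat i)).
  split; nra.
Qed.

(* Over a stretch of length X = psi(t) - s_{k1-1} there are at most p (X / psi(omega) + 1)
   jumps, so (C6) makes the Gronwall bound decay at the rate gamma. *)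
Lemma comparison_bound_decay k1 k t M : (k1 + Z.of_nat (p * M) <= k)%Z ->
  theta (2 * k - 1)%Z <= t <= theta (2 * k)%Z ->
  - lm + d + INR p / Psi * Lg < 0 ->
  comparison_bound theta lm d A k1 k t
  <= A * exp (INR p * Lg) * exp ((- lm + d + INR p / Psi * Lg) * (Psi * INR M)).
Proof.
  intros Hk Ht Hgam.
  pose proof (period_pos theta omega p omega_pos theta_periodic) as Hp.
  pose proof (psi_omega_pos theta theta_incr omega p omega_pos theta_periodic) as HPsi.
  pose proof (delta_max_nonneg theta theta_incr omega p omega_pos theta_periodic) as Hdm.
  assert (HLg : 0 <= Lg).
  { rewrite <- ln_1. destruct (Rle_lt_or_eq_dec 0 (delta_max theta p * d)) as [Hlt | Heq]; [nra | |].
    - left. apply ln_increasing; lra.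
    - rewrite <- Heq, Rplus_0_r. lra. }
  set (gam := - lm + d + INR p / Psi * Lg) in *.
  set (X := psi_loc theta k t - s_seq theta (k1 - 1)).
  set (N := Z.to_nat (k - k1)).
  assert (Hgap : Psi * INR (N / p) <= X).
  { pose proof (s_seq_gap theta theta_incr omega p omega_pos theta_periodic (k - 1) N).
    replace (k - 1 - Z.of_nat N)%Z with (k1 - 1)%Z in H by (unfold N; lia).
    pose proof (psi_loc_bounds theta k t Ht). unfold X. lra. }
  destruct (count_bounds_of_gap Psi X N M p HPsi Hp ltac:(unfold N; lia) Hgap) as [HX HN].
  assert (HB : comparison_bound theta lm d A k1 k t
               = A * exp ((d - lm) * X) * prodn (fun i => 1 + delta theta (k1 + Z.of_nat i) * d) N).
  { unfold comparison_bound, scaled_bound. fold N. fold X.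
    replace ((d - lm) * X) with (- lm * psi_loc theta k t + lm * s_seq theta (k1 - 1) + d * X)
      by (unfold X; ring).
    rewrite !exp_plus. ring. }
  rewrite HB.
  eapply Rle_trans.
  { apply Rmult_le_compat_l; [apply Rmult_le_pos; [auto | left; apply exp_pos] | apply jump_product_le]. }
  rewrite !Rmult_assoc, <- !exp_plus.
  apply Rmult_le_compat_l; auto. apply exp_le_exp_of_le.
  assert (Lg * INR N <= Lg * (INR p * (X / Psi) + INR p)) by (apply Rmult_le_compat_l; auto).
  assert (gam * X <= gam * (Psi * INR M)) by (apply Rmult_le_compat_neg_l; lra).
  assert ((d - lm) * X + Lg * (INR p * (X / Psi) + INR p) = gam * X + INR p * Lg)
    by (unfold gam; field; lra).
  nra.
Qed.

End Decay.

Lemma exists_nat_exp_small Cst g eps : 0 <= Cst -> g < 0 -> 0 < eps ->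
  exists M : nat, Cst * exp (g * INR M) < eps.
Proof.
  intros HC Hg Heps.
  destruct (INR_archimed (- g * eps) Cst ltac:(nra)) as [M HM].
  exists M. pose proof (pos_INR M).
  pose proof (exp_ineq1_le (- g * INR M)).
  assert (Hbig : Cst < eps * exp (- g * INR M)) by nra.
  apply (Rmult_lt_compat_r (exp (g * INR M))) in Hbig; [| apply exp_pos].
  rewrite Rmult_assoc, <- exp_plus in Hbig.
  replace (- g * INR M + g * INR M) with 0 in Hbig by ring.
  rewrite exp_0 in Hbig. lra.
Qed.

Section Orbits.

Variables (m n : nat) (Lam : vec -> Prop) (F : vec -> vec).
Hypothesis Lam_compact : seq_compact m n Lam.
Hypothesis F_continuous : cont_on m n Lam F.
Hypothesis F_maps_to : forall v, Lam v -> Lam (F v).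

Lemma uniform_continuity_on_compact eps : eps > 0 -> exists delta0, delta0 > 0 /\
  forall u v, Lam u -> Lam v -> vnorm m n (vsub u v) < delta0 ->
    vnorm m n (vsub (F u) (F v)) < eps.
Proof.
  intros Heps. apply NNPP. intros Hn.
  assert (Hbad : forall N : nat, exists uv : vec * vec, Lam (fst uv) /\ Lam (snd uv) /\
             vnorm m n (vsub (fst uv) (snd uv)) < / INR (S N) /\
             eps <= vnorm m n (vsub (F (fst uv)) (F (snd uv)))).
  { intros N. apply NNPP. intros Hn2. apply Hn. exists (/ INR (S N)).
    split; [apply Rinv_0_lt_compat, lt_0_INR; lia|].
    intros u v Hu Hv Huv. apply Rnot_le_lt. intros Hle. apply Hn2. exists (u, v). simpl. auto. }
  destruct (choice _ Hbad) as [g Hg].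
  destruct (Lam_compact (fun N => fst (g N)) (fun N => proj1 (Hg N)))
    as [phi [w [Hphi [Hw Hconv]]]].
  destruct (F_continuous w Hw (eps / 2) ltac:(lra)) as [d1 [Hd1 Hc]].
  destruct (Hconv (d1 / 2) ltac:(lra)) as [N1 HN1].
  destruct (INR_archimed (d1 / 2) 1 ltac:(lra)) as [N2 HN2].
  set (k := (N1 + N2)%nat).
  assert (Hphik : forall k, (k <= phi k)%nat)
    by (induction k0; [lia | specialize (Hphi k0); lia]).
  specialize (HN1 k ltac:(unfold k; lia)).
  destruct (Hg (phi k)) as [Hu [Hv [Huv Hfar]]].
  assert (Hsmall : / INR (S (phi k)) < d1 / 2).
  { assert (INR N2 <= INR (S (phi k))) by (apply le_INR; specialize (Hphik k); unfold k in *; lia).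
    assert (0 < INR (S (phi k))) by (apply lt_0_INR; lia).
    apply (Rmult_lt_reg_l (INR (S (phi k)))); auto. rewrite Rinv_r by lra. nra. }
  assert (Hvw : vnorm m n (vsub (snd (g (phi k))) w) < d1).
  { pose proof (vnorm_vsub_triang m n (snd (g (phi k))) (fst (g (phi k))) w).
    rewrite vnorm_vsub_sym in Huv. lra. }
  pose proof (Hc _ Hu ltac:(lra)). pose proof (Hc _ Hv Hvw).
  pose proof (vnorm_vsub_triang m n (F (fst (g (phi k)))) (F w) (F (snd (g (phi k))))).
  rewrite (vnorm_vsub_sym m n (F w)) in H1. lra.
Qed.

Lemma iterates_uniformly_close J eps : eps > 0 -> exists delta0, delta0 > 0 /\
  forall u v, Lam u -> Lam v -> vnorm m n (vsub u v) < delta0 ->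
    forall j, (j <= J)%nat -> vnorm m n (vsub (Nat.iter j F u) (Nat.iter j F v)) < eps.
Proof.
  revert eps. induction J; intros eps Heps.
  - exists eps. split; auto. intros u v Hu Hv Huv j Hj. replace j with 0%nat by lia. exact Huv.
  - destruct (uniform_continuity_on_compact eps Heps) as [d1 [Hd1 Huc]].
    destruct (IHJ (Rmin d1 eps) ltac:(apply Rmin_pos; lra)) as [d0 [Hd0 Hcl]].
    exists d0. split; auto. intros u v Hu Hv Huv j Hj.
    assert (Hit : forall j u, Lam u -> Lam (Nat.iter j F u)) by (induction j0; simpl; auto).
    destruct (Nat.eq_dec j (S J)) as [-> | Hne].
    + simpl. apply Huc; auto.
      eapply Rlt_le_trans; [apply (Hcl u v Hu Hv Huv J (le_n _)) | apply Rmin_l].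
    + eapply Rlt_le_trans; [apply (Hcl u v Hu Hv Huv j ltac:(lia)) | apply Rmin_r].
Qed.

Lemma orbit_iter zeta : in_Theta Lam F zeta ->
  forall k1 j, zeta (k1 + Z.of_nat j)%Z = Nat.iter j F (zeta k1).
Proof.
  intros Hz k1 j. induction j; [simpl; rewrite Z.add_0_r; auto|].
  change (Nat.iter (S j) F (zeta k1)) with (F (Nat.iter j F (zeta k1))). rewrite <- IHj.
  replace (k1 + Z.of_nat (S j))%Z with (k1 + Z.of_nat j + 1)%Z by lia.
  apply (Hz (k1 + Z.of_nat j)%Z).
Qed.

Lemma orbits_close_on_window zeta zeta' : in_Theta Lam F zeta -> in_Theta Lam F zeta' ->
  liminf_eq (fun k : nat => vnorm m n (vsub (zeta (Z.of_nat k)) (zeta' (Z.of_nat k)))) 0 ->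
  forall (J : nat) eta0, eta0 > 0 -> exists k1 : Z,
    forall nu, (k1 <= nu <= k1 + Z.of_nat J)%Z -> vnorm m n (vsub (zeta nu) (zeta' nu)) <= eta0.
Proof.
  intros Hz Hz' Hlim J eta0 Heta.
  destruct (iterates_uniformly_close J eta0 Heta) as [dl [Hdl Hcl]].
  destruct (proj2 (Hlim dl Hdl) 0%nat) as [kk [_ Hkk]]. rewrite Rplus_0_l in Hkk.
  exists (Z.of_nat kk). intros nu Hnu.
  replace nu with (Z.of_nat kk + Z.of_nat (Z.to_nat (nu - Z.of_nat kk)))%Z by lia.
  rewrite (orbit_iter zeta Hz), (orbit_iter zeta' Hz'). left.
  apply Hcl; [apply (Hz (Z.of_nat kk)) | apply (Hz' (Z.of_nat kk)) | exact Hkk | lia].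
Qed.

End Orbits.

(** * Proximality *)

Lemma le_of_le_geometric X Y c R0 : 0 <= c < 1 -> 0 <= R0 -> (forall N, X <= Y + c ^ N * R0) -> X <= Y.
Proof.
  intros Hc HR H. destruct (Rle_or_lt X Y) as [|Hlt]; auto. exfalso.
  destruct (pow_lt_1_zero c ltac:(rewrite Rabs_pos_eq; lra) ((X - Y) / (R0 + 1))
              ltac:(apply Rdiv_lt_0_compat; lra)) as [N HN].
  specialize (HN N (le_n _)). specialize (H N).
  rewrite Rabs_pos_eq in HN by (apply pow_le; lra).
  apply (Rmult_lt_compat_r (R0 + 1)) in HN; [|lra].
  replace ((X - Y) / (R0 + 1) * (R0 + 1)) with (X - Y) in HN by (field; lra).
  pose proof (pow_le c N (proj1 Hc)). nra.
Qed.

Section DifferenceOfSolutions.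

Variables (m n r : nat) (a : nat -> nat -> R) (C : nat -> nat -> nat -> nat -> R) (f : R -> R).
Variables (theta : Z -> R) (omega : R) (p : nat).
Hypothesis theta_incr : forall k : Z, theta k < theta (k + 1)%Z.
Hypothesis omega_pos : 0 < omega.
Hypothesis theta_periodic : forall k : Z, theta (k + 2 * Z.of_nat p)%Z = theta k + omega.
Variables (Mf Lf H : R) (K : nat -> nat -> R).
Hypotheses (Mf_nonneg : 0 <= Mf) (Lf_nonneg : 0 <= Lf) (H_nonneg : 0 <= H).
Hypothesis f_bounded : forall u, Rabs (f u) <= Mf.
Hypothesis f_lipschitz : forall u v, Rabs (f u - f v) <= Lf * Rabs (u - v).
Hypothesis C_nonneg : forall i j h l, is_cell m n i j -> is_cell m n h l -> 0 <= C i j h l.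
Hypothesis K_nonneg : forall i j, is_cell m n i j -> 0 <= K i j.
Hypothesis K_u_bound : forall i j, is_cell m n i j -> u_bound theta omega p (a i j) (K i j).
Variables (zeta zeta' : Z -> vec) (x y : R -> vec).
Hypothesis x_sol : is_sol_N m n r a C f theta zeta x.
Hypothesis y_sol : is_sol_N m n r a C f theta zeta' y.
Hypothesis x_bounded : forall t, inT0 theta t -> vnorm m n (x t) <= H.
Hypothesis y_bounded : forall t, inT0 theta t -> vnorm m n (y t) <= H.
Variables (lm d A : R).
Hypothesis lambda_pos : forall i j, is_cell m n i j -> 0 < lambda_ij theta omega p (a i j).
Hypothesis lm_le_lambda : forall i j, is_cell m n i j -> lm <= lambda_ij theta omega p (a i j).
Hypotheses (d_nonneg : 0 <= d) (A_nonneg : 0 <= A).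
Hypothesis A_ge : forall i j, is_cell m n i j -> K i j * (2 * H) <= A.
Hypothesis d_ge : forall i j, is_cell m n i j ->
  K i j * ((Mf + H * Lf) * nbsum m n r i j (C i j)) <= d.

Local Notation B := (comparison_bound theta lm d A).
Local Notation Pc i j := ((Mf + H * Lf) * nbsum m n r i j (C i j)).
Local Notation coef i j := (coefK theta omega p (a i j) (K i j)).

Lemma inT0_of_interval l tau : theta (2 * l - 1)%Z <= tau <= theta (2 * l)%Z -> inT0 theta tau.
Proof. intros. exists l. auto. Qed.

Lemma difference_le_2H tau : inT0 theta tau -> vnorm m n (vsub (x tau) (y tau)) <= 2 * H.
Proof.
  intros Htau. pose proof (vnorm_vsub_le m n (x tau) (y tau)).
  pose proof (x_bounded tau Htau). pose proof (y_bounded tau Htau). lra.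
Qed.

Lemma coupling_difference_le i j tau : is_cell m n i j -> inT0 theta tau ->
  Rabs (coupling m n r i j (C i j) f (x tau) - coupling m n r i j (C i j) f (y tau))
  <= Pc i j * vnorm m n (vsub (x tau) (y tau)).
Proof. intros Hij Htau. apply coupling_lipschitz; auto. Qed.

Lemma forcing_difference_le i j k1 k l tau eta0 th rho : is_cell m n i j ->
  (k1 <= l <= k)%Z -> theta (2 * l - 1)%Z <= tau <= theta (2 * l)%Z ->
  (forall nu, (k1 <= nu <= k)%Z -> vnorm m n (vsub (zeta nu) (zeta' nu)) <= eta0) ->
  vnorm m n (vsub (x tau) (y tau)) <= B k1 l tau + th + rho ->
  Rabs (- (coupling m n r i j (C i j) f (x tau) - coupling m n r i j (C i j) f (y tau))
        + (zeta l i j - zeta' l i j))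
  <= Pc i j * B k1 l tau + (Pc i j * (th + rho) + eta0).
Proof.
  intros Hij Hl Htau Hz Hwin.
  assert (HPc : 0 <= Pc i j)
    by (apply Rmult_le_pos; [nra | apply nbsum_nonneg; intros; apply C_nonneg; auto]).
  eapply Rle_trans; [apply Rabs_triang|]. rewrite Rabs_Ropp.
  pose proof (coupling_difference_le i j tau Hij (inT0_of_interval l tau Htau)).
  pose proof (Rabs_le_vnorm m n (vsub (zeta l) (zeta' l)) i j Hij).
  pose proof (Hz l Hl). unfold vsub in *. nra.
Qed.

(* One step of the argument: a bound B + th + rho on a window of intervals improves, cell by
   cell, through the variation of constants formula. *)
Lemma cell_difference_le eta0 th rho k1 k t i j : is_cell m n i j ->
  0 <= eta0 -> 0 <= th + rho -> (k1 <= k)%Z -> theta (2 * k - 1)%Z <= t <= theta (2 * k)%Z ->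
  (forall nu, (k1 <= nu <= k)%Z -> vnorm m n (vsub (zeta nu) (zeta' nu)) <= eta0) ->
  (forall l tau, (k1 <= l <= k)%Z -> theta (2 * l - 1)%Z <= tau <= theta (2 * l)%Z ->
     vnorm m n (vsub (x tau) (y tau)) <= B k1 l tau + th + rho) ->
  Rabs (x t i j - y t i j) <= B k1 k t + (Pc i j * (th + rho) + eta0) * coef i j.
Proof.
  intros Hij Heta Hthr Hk Ht Hz Hwin.
  assert (HPc : 0 <= Pc i j)
    by (apply Rmult_le_pos; [nra | apply nbsum_nonneg; intros; apply C_nonneg; auto]).
  eapply Rle_trans.
  { apply (variation_of_constants_bound theta theta_incr (a i j) (K i j)
             (lambda_ij theta omega p (a i j)) lm d A (Pc i j) (Pc i j * (th + rho) + eta0) k1 k t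
             (fun u => x u i j - y u i j)
             (fun l tau => (- a i j * x tau i j - coupling m n r i j (C i j) f (x tau) + zeta l i j)
                           - (- a i j * y tau i j - coupling m n r i j (C i j) f (y tau) + zeta' l i j))
             (fun l => - (coupling m n r i j (C i j) f (x (theta (2 * l)%Z))
                          - coupling m n r i j (C i j) f (y (theta (2 * l)%Z)))
                       + (zeta l i j - zeta' l i j)));
      auto; try nra.
    - intros l T Hl HT HTS.
      pose proof (psi_loc_bounds theta k t Ht).
      apply (u_bound_closed theta theta_incr omega p); auto; lia.
    - intros l tau Hl Htau. apply deriv_within_minus.
      + apply (proj1 (x_sol l i j Hij)); auto.
      + apply (proj1 (y_sol l i j Hij)); auto.
    - intros l Hl. rewrite (proj2 (x_sol l i j Hij)), (proj2 (y_sol l i j Hij)).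
      unfold coupling. ring.
    - intros l tau Hl Htau.
      replace (- a i j * x tau i j - coupling m n r i j (C i j) f (x tau) + zeta l i j
               - (- a i j * y tau i j - coupling m n r i j (C i j) f (y tau) + zeta' l i j)
               + a i j * (x tau i j - y tau i j))
        with (- (coupling m n r i j (C i j) f (x tau) - coupling m n r i j (C i j) f (y tau))
              + (zeta l i j - zeta' l i j)) by ring.
      apply (forcing_difference_le i j k1 k); auto; [lra | apply Hwin; auto; lra].
    - intros l Hl. pose proof (theta_interval theta theta_incr l).
      apply (forcing_difference_le i j k1 k); auto; [lia | lra | apply Hwin; [lia | lra]].
    - pose proof (theta_interval theta theta_incr k1).
      pose proof (difference_le_2H _ (inT0_of_interval k1 (theta (2 * k1 - 1)%Z) ltac:(lra))).
      pose proof (Rabs_le_vnorm m n (vsub (x (theta (2 * k1 - 1)%Z)) (y (theta (2 * k1 - 1)%Z))) i j Hij).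
      unfold vsub in *. pose proof (K_nonneg i j Hij). pose proof (A_ge i j Hij). nra. }
  rewrite Rplus_assoc. apply Rplus_le_compat_l.
  apply (kernel_mass_le_coefK theta theta_incr omega p omega_pos theta_periodic); auto; nra.
Qed.

Variables (c Mc : R).
Hypotheses (c_nonneg : 0 <= c) (c_lt_1 : c < 1) (Mc_nonneg : 0 <= Mc).
Hypothesis coef_nonneg : forall i j, is_cell m n i j -> 0 <= coef i j.
Hypothesis coef_le_Mc : forall i j, is_cell m n i j -> coef i j <= Mc.
Hypothesis Pc_coef_le_c : forall i j, is_cell m n i j -> Pc i j * coef i j <= c.

(* Starting from the a priori bound 2H, each round of [cell_difference_le] multiplies the excess
   over B + th by c, where th = eta0 Mc / (1 - c) solves th = c th + eta0 Mc. *)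
Lemma difference_le_on_window eta0 k1 kend : 0 <= eta0 ->
  (forall nu, (k1 <= nu <= kend)%Z -> vnorm m n (vsub (zeta nu) (zeta' nu)) <= eta0) ->
  forall k t, (k1 <= k <= kend)%Z -> theta (2 * k - 1)%Z <= t <= theta (2 * k)%Z ->
    vnorm m n (vsub (x t) (y t)) <= B k1 k t + eta0 * Mc / (1 - c).
Proof.
  intros Heta Hz.
  set (th := eta0 * Mc / (1 - c)).
  assert (Hth : 0 <= th) by (unfold th; apply Rmult_le_pos; [nra | left; apply Rinv_0_lt_compat; lra]).
  assert (Hfix : c * th + eta0 * Mc = th) by (unfold th; field; lra).
  set (window := fun rho => forall l tau, (k1 <= l <= kend)%Z ->
         theta (2 * l - 1)%Z <= tau <= theta (2 * l)%Z ->
         vnorm m n (vsub (x tau) (y tau)) <= B k1 l tau + th + rho).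
  assert (Hstep : forall rho, 0 <= rho -> window rho -> window (c * rho)).
  { intros rho Hrho Hwin l tau Hl Htau.
    pose proof (comparison_bound_nonneg theta theta_incr lm d A k1 d_nonneg A_nonneg l tau).
    apply vnorm_le; [nra|]. intros i j Hij. unfold vsub.
    eapply Rle_trans.
    { apply (cell_difference_le eta0 th rho k1 l tau i j Hij Heta); try lra; try lia.
      - intros nu Hnu. apply Hz. lia.
      - intros l' tau' Hl' Htau'. apply Hwin; auto. lia. }
    pose proof (Pc_coef_le_c i j Hij). pose proof (coef_le_Mc i j Hij). pose proof (coef_nonneg i j Hij).
    nra. }
  assert (Hinit : window (2 * H)).
  { intros l tau Hl Htau.
    pose proof (difference_le_2H tau (inT0_of_interval l tau Htau)).
    pose proof (comparison_bound_nonneg theta theta_incr lm d A k1 d_nonneg A_nonneg l tau). lra. }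
  assert (Hall : forall N, window (c ^ N * (2 * H))).
  { induction N; [simpl; rewrite Rmult_1_l; auto|].
    simpl. rewrite Rmult_assoc. apply Hstep; auto. apply Rmult_le_pos; [apply pow_le|]; lra. }
  intros k t Hk Ht.
  apply (le_of_le_geometric _ _ c (2 * H)); [lra | lra |].
  intros N. specialize (Hall N k t Hk Ht). lra.
Qed.

Variables (Lam : vec -> Prop) (F : vec -> vec).
Hypothesis Lam_compact : seq_compact m n Lam.
Hypothesis F_continuous : cont_on m n Lam F.
Hypothesis F_maps_to : forall v, Lam v -> Lam (F v).
Hypotheses (zeta_orbit : in_Theta Lam F zeta) (zeta'_orbit : in_Theta Lam F zeta').
Hypothesis liminf_zero :
  liminf_eq (fun k : nat => vnorm m n (vsub (zeta (Z.of_nat k)) (zeta' (Z.of_nat k)))) 0.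
Hypothesis decay_rate_neg :
  - lm + d + INR p / psi_omega theta omega p * ln (1 + delta_max theta p * d) < 0.

(* Choose the orbits eta0-close on a window of p M + E intervals, with M so large that
   the Gronwall bound has decayed below eps / 2 after its first p M intervals. *)
Theorem proximal_solutions eps : eps > 0 -> forall E : nat, exists k0 : Z,
  forall t, theta (2 * k0 - 1)%Z <= t <= theta (2 * (k0 + Z.of_nat E))%Z ->
    inT0 theta t -> vnorm m n (vsub (x t) (y t)) < eps.
Proof.
  intros Heps E.
  set (gam := - lm + d + INR p / psi_omega theta omega p * ln (1 + delta_max theta p * d)).
  set (Cst := A * exp (INR p * ln (1 + delta_max theta p * d))).
  set (eta0 := eps * (1 - c) / (2 * (Mc + 1))).
  assert (Heta : eta0 > 0) by (unfold eta0; apply Rdiv_lt_0_compat; nra).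
  assert (Hth : eta0 * Mc / (1 - c) < eps / 2).
  { unfold eta0. replace (eps * (1 - c) / (2 * (Mc + 1)) * Mc / (1 - c))
      with (eps / 2 * (Mc / (Mc + 1))) by (field; lra).
    assert (Mc / (Mc + 1) < 1).
    { apply (Rmult_lt_reg_r (Mc + 1)); [lra|].
      unfold Rdiv. rewrite Rmult_assoc, Rinv_l by lra. lra. }
    nra. }
  assert (HCst : 0 <= Cst)
    by (unfold Cst; apply Rmult_le_pos; [lra | left; apply exp_pos]).
  assert (Hgam : gam * psi_omega theta omega p < 0)
    by (pose proof (psi_omega_pos theta theta_incr omega p omega_pos theta_periodic); unfold gam; nra).
  destruct (exists_nat_exp_small Cst _ (eps / 2) HCst Hgam ltac:(lra)) as [M HM].
  destruct (orbits_close_on_window m n Lam F Lam_compact F_continuous F_maps_to zeta zeta'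
              zeta_orbit zeta'_orbit liminf_zero (p * M + E) eta0 Heta) as [k1 Hz].
  exists (k1 + Z.of_nat (p * M))%Z. intros t Ht [k Hk].
  pose proof (interval_index_between theta theta_incr _ _ k t Ht Hk) as Hkk.
  pose proof (difference_le_on_window eta0 k1 (k1 + Z.of_nat (p * M + E)) ltac:(lra) Hz k t
                ltac:(lia) Hk) as Hwin.
  pose proof (comparison_bound_decay theta theta_incr omega p omega_pos theta_periodic lm d A
                d_nonneg A_nonneg k1 k t M ltac:(lia) Hk decay_rate_neg) as Hdecay.
  fold gam Cst in Hdecay. rewrite <- Rmult_assoc in Hdecay. lra.
Qed.

End DifferenceOfSolutions.

Section Constants.

Variables (m n r : nat) (a : nat -> nat -> R) (C : nat -> nat -> nat -> nat -> R).
Variables (theta : Z -> R) (omega : R) (p : nat) (K : nat -> nat -> R).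
Hypothesis cell_11 : is_cell m n 1 1.
Hypothesis theta_incr : forall k : Z, theta k < theta (k + 1)%Z.
Hypothesis omega_pos : 0 < omega.
Hypothesis theta_periodic : forall k : Z, theta (k + 2 * Z.of_nat p)%Z = theta k + omega.
Hypothesis C_nonneg : forall i j h l, is_cell m n i j -> is_cell m n h l -> 0 <= C i j h l.
Hypothesis K_pos : forall i j, is_cell m n i j -> 0 < K i j.
Hypothesis lambda_min_pos : lambda_min m n theta omega p a > 0.

Local Notation coef i j := (coefK theta omega p (a i j) (K i j)).
Local Notation cb := (cbar m n r theta omega p a K C).

Lemma lambda_ij_pos i j : is_cell m n i j -> 0 < lambda_ij theta omega p (a i j).
Proof.
  intros Hij. pose proof (cellmin_le m n (fun i j => lambda_ij theta omega p (a i j)) i j Hij).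
  unfold lambda_min in lambda_min_pos. lra.
Qed.

Lemma nbsum_C_nonneg i j : is_cell m n i j -> 0 <= nbsum m n r i j (C i j).
Proof. intros Hij. apply nbsum_nonneg. intros; apply C_nonneg; auto. Qed.

Lemma coefK_pos i j : is_cell m n i j -> 0 < coef i j.
Proof.
  intros Hij. unfold coefK.
  pose proof (lambda_ij_pos i j Hij) as Hlam. pose proof (K_pos i j Hij).
  pose proof (psi_omega_pos theta theta_incr omega p omega_pos theta_periodic).
  pose proof (delta_max_nonneg theta theta_incr omega p omega_pos theta_periodic).
  assert (exp (- lambda_ij theta omega p (a i j) * psi_omega theta omega p) < 1)
    by (rewrite <- exp_0; apply exp_increasing; nra).
  assert (0 < K i j / lambda_ij theta omega p (a i j)) by (apply Rdiv_lt_0_compat; auto).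
  assert (0 <= INR p * delta_max theta p * K i j
               / (1 - exp (- lambda_ij theta omega p (a i j) * psi_omega theta omega p))).
  { apply Rmult_le_pos; [| left; apply Rinv_0_lt_compat; lra].
    pose proof (pos_INR p). apply Rmult_le_pos; [apply Rmult_le_pos|]; lra. }
  lra.
Qed.

Lemma cbar_nonneg : 0 <= cb.
Proof.
  pose proof (le_cellmax m n (fun i j => coef i j * nbsum m n r i j (C i j)) 1 1 cell_11).
  pose proof (coefK_pos 1 1 cell_11). pose proof (nbsum_C_nonneg 1 1 cell_11).
  unfold cbar. nra.
Qed.

Lemma coupling_coef_le_cbar D i j : 0 <= D -> is_cell m n i j ->
  D * nbsum m n r i j (C i j) * coef i j <= D * cb.
Proof.
  intros HD Hij. rewrite Rmult_assoc. apply Rmult_le_compat_l; auto.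
  rewrite Rmult_comm. apply (le_cellmax m n (fun i j => coef i j * nbsum m n r i j (C i j))), Hij.
Qed.

Lemma coupling_K_le D i j : 0 <= D -> is_cell m n i j ->
  K i j * (D * nbsum m n r i j (C i j))
  <= D * cellmax m n (fun i j => K i j * nbsum m n r i j (C i j)).
Proof.
  intros HD Hij. replace (K i j * (D * nbsum m n r i j (C i j)))
    with (D * (K i j * nbsum m n r i j (C i j))) by ring.
  apply Rmult_le_compat_l; auto. apply (le_cellmax m n (fun i j => K i j * nbsum m n r i j (C i j))), Hij.
Qed.

Lemma H0_nonneg MF Mf : 0 <= MF -> Mf * cb < 1 -> 0 <= H0 m n r theta omega p a K C MF Mf.
Proof.
  intros HMF Hden. unfold H0.
  pose proof (le_cellmax m n (fun i j => coef i j) 1 1 cell_11). pose proof (coefK_pos 1 1 cell_11).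
  apply Rmult_le_pos; [apply Rmult_le_pos; [auto | left; apply Rinv_0_lt_compat; lra] | lra].
Qed.

Lemma dbar_nonneg MF Mf Lf : 0 <= Mf + H0 m n r theta omega p a K C MF Mf * Lf ->
  0 <= dbar m n r theta omega p a K C MF Mf Lf.
Proof.
  intros HD. unfold dbar. apply Rmult_le_pos; auto.
  pose proof (le_cellmax m n (fun i j => K i j * nbsum m n r i j (C i j)) 1 1 cell_11).
  pose proof (K_pos 1 1 cell_11). pose proof (nbsum_C_nonneg 1 1 cell_11). nra.
Qed.

End Constants.
Theorem lemma3
  (m n r : nat) (Hm : (1 <= m)%nat) (Hn : (1 <= n)%nat)
  (a : nat -> nat -> R) (Ha : forall i j, is_cell m n i j -> 0 < a i j)
  (C : nat -> nat -> nat -> nat -> R)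
  (HC : forall i j h l, is_cell m n i j -> is_cell m n h l -> 0 <= C i j h l)
  (f : R -> R) (Hfc : continuity f)
  (theta : Z -> R) (Hmono : forall k : Z, theta k < theta (k + 1)%Z)
  (Hneg : theta (-1)%Z < 0) (Hpos : 0 < theta 0%Z)
  (omega : R) (Homega : 0 < omega) (p : nat)
  (Hper : forall k : Z, theta (k + 2 * Z.of_nat p)%Z = theta k + omega)
  (Lam : vec -> Prop) (HLc : seq_compact m n Lam)
  (F : vec -> vec) (HFL : forall v, Lam v -> Lam (F v)) (HFc : cont_on m n Lam F)
  (MF : R) (HMF1 : exists v, Lam v /\ vnorm m n (F v) = MF)
  (HMF2 : forall v, Lam v -> vnorm m n (F v) <= MF)
  (* (C1) *)
  (HC1 : forall (i j : nat) (k : Z), is_cell m n i j -> delta theta k * a i j <> 1)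
  (* (C2) *)
  (HC2 : lambda_min m n theta omega p a > 0)
  (* (C3) *)
  (Mf : R) (HMf : Mf > 0) (HC3 : forall u, Rabs (f u) <= Mf)
  (* (C4) *)
  (Lf : R) (HLf : Lf > 0) (HC4 : forall u v, Rabs (f u - f v) <= Lf * Rabs (u - v))
  (* the constants K_ij *)
  (K : nat -> nat -> R) (HK : forall i j, is_cell m n i j -> 0 < K i j)
  (HKu : forall i j, is_cell m n i j -> u_bound theta omega p (a i j) (K i j))
  (* denominator of H0 positive (implicit in the definition of H0) *)
  (Hden : Mf * cbar m n r theta omega p a K C < 1)
  (* (C5) *)
  (HC5 : (Mf + H0 m n r theta omega p a K C MF Mf * Lf)
           * cbar m n r theta omega p a K C < 1)
  (* (C6) *)
  (HC6 : - lambda_min m n theta omega p a + dbar m n r theta omega p a K C MF Mf Lf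
         + INR p / psi_omega theta omega p
           * ln (1 + delta_max theta p * dbar m n r theta omega p a K C MF Mf Lf) < 0)
  (zeta zeta' : Z -> vec) (Hz : in_Theta Lam F zeta) (Hz' : in_Theta Lam F zeta')
  (Hlim : liminf_eq (fun k : nat => vnorm m n (vsub (zeta (Z.of_nat k)) (zeta' (Z.of_nat k)))) 0)
  (* varphi_zeta, varphi_zeta': the (unique) solutions of (N_zeta), (N_zeta')
     on T_0 bounded by H0 *)
  (x y : R -> vec)
  (Hx : is_sol_N m n r a C f theta zeta x)
  (Hxb : forall t, inT0 theta t -> vnorm m n (x t) <= H0 m n r theta omega p a K C MF Mf)
  (Hy : is_sol_N m n r a C f theta zeta' y)
  (Hyb : forall t, inT0 theta t -> vnorm m n (y t) <= H0 m n r theta omega p a K C MF Mf) :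
  forall eps : R, eps > 0 -> forall E : nat, exists k0 : Z,
    forall t, theta (2 * k0 - 1)%Z <= t <= theta (2 * (k0 + Z.of_nat E))%Z ->
      inT0 theta t -> vnorm m n (vsub (x t) (y t)) < eps.
Proof.
  assert (H11 : is_cell m n 1 1) by (unfold is_cell; lia).
  assert (HMF : 0 <= MF) by (destruct HMF1 as [v [_ <-]]; apply vnorm_nonneg).
  assert (HH0 : 0 <= H0 m n r theta omega p a K C MF Mf) by (eapply H0_nonneg; eauto).
  set (H0v := H0 m n r theta omega p a K C MF Mf) in *.
  assert (HD : 0 <= Mf + H0v * Lf) by nra.
  assert (Hcb : 0 <= cbar m n r theta omega p a K C) by (eapply cbar_nonneg; eauto).
  intros eps Heps E.
  apply (proximal_solutions m n r a C f theta omega p Hmono Homega Hper Mf Lf H0v K)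
    with (lm := lambda_min m n theta omega p a) (d := dbar m n r theta omega p a K C MF Mf Lf)
         (A := cellmax m n K * (2 * H0v)) (c := (Mf + H0v * Lf) * cbar m n r theta omega p a K C)
         (Mc := cellmax m n (fun i j => coefK theta omega p (a i j) (K i j)))
         (Lam := Lam) (F := F) (zeta := zeta) (zeta' := zeta');
    auto; try lra; try nra.
  all: try (intros i j Hij).
  - left; auto.
  - eapply lambda_ij_pos; eauto.
  - apply (cellmin_le m n (fun i j => lambda_ij theta omega p (a i j))), Hij.
  - eapply dbar_nonneg; eauto.
  - pose proof (le_cellmax m n K 1 1 H11). pose proof (HK 1%nat 1%nat H11). nra.
  - apply Rmult_le_compat_r; [lra | apply le_cellmax, Hij].
  - unfold dbar. apply coupling_K_le; auto.
  - pose proof (le_cellmax m n (fun i j => coefK theta omega p (a i j) (K i j)) 1 1 H11).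
    assert (0 < coefK theta omega p (a 1%nat 1%nat) (K 1%nat 1%nat)) by (eapply coefK_pos; eauto).
    lra.
  - left. eapply coefK_pos; eauto.
  - apply (le_cellmax m n (fun i j => coefK theta omega p (a i j) (K i j))), Hij.
  - eapply coupling_coef_le_cbar; eauto.
Qed.
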